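(* Let $d\ge1$, $\boldsymbol k\in\mathbb Z^d$, $x>0$, $\boldsymbol y\in\mathbb R_+^d$, $\phi\in\mathbb R$. Then $$J_{\boldsymbol k}(\boldsymbol y;2\pi x,\phi)=\frac1{2\pi}\sum_{m\in\mathbb Z}e^{im\phi}j_{(0,m)}(xy_1\cdots y_d)\prod_{l=1}^dj_{(0,k_l+m)}(xy_l^{-1}),$$ the series being absolutely convergent.
   Context: $j_{(0,m)}(x)=2\pi i^mJ_m(4\pi x)$ with $J_m$ the classical $J$-Bessel function. $\Theta_{\boldsymbol k}(\boldsymbol\theta,\boldsymbol y;x,\phi)=2xy_1\cdots y_d\cos(\sum_{l=1}^d\theta_l+\phi)+\sum_{l=1}^d(k_l\theta_l+2xy_l^{-1}\cos\theta_l)$ and $J_{\boldsymbol k}(\boldsymbol y;x,\phi)=\int_{[0,2\pi]^d}e^{i\Theta_{\boldsymbol k}(\boldsymbol\theta,\boldsymbol y;x,\phi)}d\boldsymbol\theta$. *)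

From Stdlib Require Import Reals ZArith Arith.
From Coquelicot Require Import Coquelicot.
Open Scope R_scope.

Definition cis (t : R) : C := (cos t, sin t).

Definition Cpowz (z : C) (m : Z) : C :=
  if (0 <=? m)%Z then Cpow z (Z.to_nat m) else Cinv (Cpow z (Z.to_nat (- m))).

Definition besselJ_nat (n : nat) (z : R) : R :=
  Series (fun k => (-1) ^ k / (INR (fact k) * INR (fact (k + n))) * (z / 2) ^ (2 * k + n)).

Definition besselJ (m : Z) (z : R) : R :=
  if (0 <=? m)%Z then besselJ_nat (Z.to_nat m) z
  else (-1) ^ (Z.to_nat (- m)) * besselJ_nat (Z.to_nat (- m)) z.

Definition j0 (m : Z) (x : R) : C :=
  Cmult (RtoC (2 * PI)) (Cmult (Cpowz Ci m) (RtoC (besselJ m (4 * PI * x)))).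

(* Iterated Riemann integral over [0,2pi]^d of f : (nat -> R) -> R, where the
   point theta of [0,2pi]^d is encoded by its coordinates theta 0, ..., theta (d-1). *)
Fixpoint cube_int (d : nat) (f : (nat -> R) -> R) : R :=
  match d with
  | O => f (fun _ => 0)
  | S d' => RInt (fun t => cube_int d'
                   (fun th => f (fun i => if Nat.eqb i d' then t else th i))) 0 (2 * PI)
  end.

Fixpoint sumd (d : nat) (a : nat -> R) : R :=
  match d with O => 0 | S d' => sumd d' a + a d' end.
Fixpoint prodd (d : nat) (a : nat -> R) : R :=
  match d with O => 1 | S d' => prodd d' a * a d' end.
Fixpoint Cprodd (d : nat) (a : nat -> C) : C :=
  match d with O => RtoC 1 | S d' => Cmult (Cprodd d' a) (a d') end.

Definition Theta (d : nat) (k : nat -> Z) (th y : nat -> R) (x phi : R) : R :=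
  2 * x * prodd d y * cos (sumd d th + phi)
  + sumd d (fun l => IZR (k l) * th l + 2 * x * / y l * cos (th l)).

Definition Jk (d : nat) (k : nat -> Z) (y : nat -> R) (x phi : R) : C :=
  (cube_int d (fun th => cos (Theta d k th y x phi)),
   cube_int d (fun th => sin (Theta d k th y x phi))).

(* Absolute convergence of a Z-indexed complex series, and its sum
   (sum over m >= 0 plus sum over m <= -1). *)
Definition abs_summable_Z (a : Z -> C) : Prop :=
  ex_series (fun n : nat => Cmod (a (Z.of_nat n))) /\
  ex_series (fun n : nat => Cmod (a (- Z.of_nat (S n))%Z)).

Definition is_sum_Z (a : Z -> C) (s : C) : Prop :=
  exists s1 s2 : C,
    is_series (V := C_NormedModule) (fun n : nat => a (Z.of_nat n)) s1 /\
    is_series (V := C_NormedModule) (fun n : nat => a (- Z.of_nat (S n))%Z) s2 /\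
    s = Cplus s1 s2.

From Stdlib Require Import Reals ZArith.
From Coquelicot Require Import Coquelicot.
From Stdlib Require Import Arith Lia Lra FunctionalExtensionality.
Open Scope R_scope.

(* Expanding [e^{i Theta}] in the term [2 X (prod y) cos (sum theta + phi)] by the Jacobi–Anger
   expansion [e^{2iu cos w} = sum_m i^m J_m(2u) e^{imw}] and integrating term by term, the m-th
   term becomes [i^m J_m(2u) e^{i m phi}] times an integral over the cube that splits into a
   product of Bessel integrals [int_0^{2 pi} e^{i (n t + 2v cos t)} dt = 2 pi i^n J_n(2v)]; these
   are the case [d = 1] of the same term-by-term integration, where orthogonality of the
   [e^{imt}] leaves a single term.
   The expansion comes from the double series [sum_(p,q) (iu)^(p+q) / (p! q!) e^{i(q-p)w}], which
   is dominated by [e^{2|u|}] uniformly in [w]: summed along the diagonals [p + q = j] it is the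
   exponential series of [2iu cos w] (expand [(2 cos w)^j] binomially), summed along the lines
   [q - p = m] it is [i^m J_m(2u) e^{imw}] (the power series of [J_m]). The uniform bound is what
   allows both the rearrangement and the integration over the cube. *)

Fixpoint csum (n : nat) (f : nat -> C) : C :=
  match n with O => RtoC 0 | S n' => Cplus (csum n' f) (f n') end.
Fixpoint rsum (n : nat) (f : nat -> R) : R :=
  match n with O => 0 | S n' => rsum n' f + f n' end.

Lemma csum_ext n f g : (forall i, (i < n)%nat -> f i = g i) -> csum n f = csum n g.
Proof. induction n; intros H; simpl; auto. rewrite IHn, H; auto. Qed.
Lemma rsum_ext n f g : (forall i, (i < n)%nat -> f i = g i) -> rsum n f = rsum n g.
Proof. induction n; intros H; simpl; auto. rewrite IHn, H; auto. Qed.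

Lemma csum_add n f g : csum n (fun i => Cplus (f i) (g i)) = Cplus (csum n f) (csum n g).
Proof. induction n; simpl. apply injective_projections; simpl; ring. rewrite IHn; ring. Qed.
Lemma rsum_add n f g : rsum n (fun i => f i + g i) = rsum n f + rsum n g.
Proof. induction n; simpl. ring. rewrite IHn; ring. Qed.

Lemma csum_sub n f g : csum n (fun i => Cminus (f i) (g i)) = Cminus (csum n f) (csum n g).
Proof. induction n; simpl. ring. rewrite IHn. ring. Qed.

Lemma csum_scal_l n c f : csum n (fun i => Cmult c (f i)) = Cmult c (csum n f).
Proof. induction n; simpl. apply injective_projections; simpl; ring. rewrite IHn; ring. Qed.
Lemma csum_scal_r n f c : csum n (fun i => Cmult (f i) c) = Cmult (csum n f) c.
Proof. rewrite (csum_ext _ _ (fun i => Cmult c (f i))) by (intros; ring). rewrite csum_scal_l. ring. Qed.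
Lemma rsum_scal_l n c f : rsum n (fun i => c * f i) = c * rsum n f.
Proof. induction n; simpl. ring. rewrite IHn; ring. Qed.

Lemma csum0 n : csum n (fun _ => RtoC 0) = RtoC 0.
Proof. induction n; simpl; auto. rewrite IHn; ring. Qed.
Lemma rsum0 n : rsum n (fun _ => 0) = 0.
Proof. induction n; simpl; auto. rewrite IHn; ring. Qed.

Lemma csum_RtoC n f : csum n (fun i => RtoC (f i)) = RtoC (rsum n f).
Proof. induction n; simpl; auto. rewrite IHn, RtoC_plus. reflexivity. Qed.

Lemma csum_swap n m (f : nat -> nat -> C) :
  csum n (fun i => csum m (fun j => f i j)) = csum m (fun j => csum n (fun i => f i j)).
Proof. induction n; simpl. rewrite csum0; auto. rewrite IHn, <- csum_add; auto. Qed.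

Lemma csum_shift n f : csum (S n) f = Cplus (f O) (csum n (fun i => f (S i))).
Proof. induction n; simpl in *. ring. rewrite IHn. ring. Qed.

Lemma csum_delta n k (f : nat -> C) :
  csum n (fun i => if Nat.eqb i k then f i else RtoC 0) = if Nat.ltb k n then f k else RtoC 0.
Proof.
  induction n; simpl; auto.
  rewrite IHn. destruct (Nat.eqb_spec n k), (Nat.ltb_spec k n), (Nat.ltb_spec k (S n));
    try lia; subst; ring.
Qed.

Lemma csum_pad n m f : (n <= m)%nat -> (forall i, (n <= i < m)%nat -> f i = RtoC 0) ->
  csum m f = csum n f.
Proof.
  intros Hnm. induction Hnm; intros H; auto. simpl. rewrite IHHnm, H. ring. lia.
  intros; apply H; lia.
Qed.

Lemma rsum_le n f g : (forall i, (i < n)%nat -> f i <= g i) -> rsum n f <= rsum n g.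
Proof. induction n; intros H; simpl. lra. apply Rplus_le_compat; auto. Qed.
Lemma rsum_ge0 n f : (forall i, (i < n)%nat -> 0 <= f i) -> 0 <= rsum n f.
Proof. intros H. rewrite <- (rsum0 n). apply rsum_le; auto. Qed.
Lemma rsum_mono n m f : (forall i, 0 <= f i) -> (n <= m)%nat -> rsum n f <= rsum m f.
Proof. intros H Hnm. induction Hnm. lra. simpl. specialize (H m). lra. Qed.

Lemma Cmod_csum_le n f : Cmod (csum n f) <= rsum n (fun i => Cmod (f i)).
Proof. induction n; simpl. rewrite Cmod_0; lra. eapply Rle_trans. apply Cmod_triangle. lra. Qed.

Lemma sum_n_csum (a : nat -> C) n : @sum_n C_AbelianMonoid a n = csum (S n) a.
Proof.
  induction n. rewrite sum_O. simpl. apply injective_projections; simpl; ring.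
  rewrite sum_Sn, IHn. reflexivity.
Qed.
Lemma sum_n_rsum (a : nat -> R) n : @sum_n R_AbelianMonoid a n = rsum (S n) a.
Proof. induction n. rewrite sum_O. simpl. ring. rewrite sum_Sn, IHn. reflexivity. Qed.

Definition cvgC (s : nat -> C) (l : C) :=
  forall eps, 0 < eps -> exists N, forall n, (N <= n)%nat -> Cmod (Cminus (s n) l) < eps.
Definition cvgR (s : nat -> R) (l : R) :=
  forall eps, 0 < eps -> exists N, forall n, (N <= n)%nat -> Rabs (s n - l) < eps.

Lemma is_series_eps {K : AbsRing} {V : NormedModule K} (a : nat -> V) l :
  is_series a l <->
  forall eps, 0 < eps -> exists N, forall n, (N <= n)%nat -> norm (minus (sum_n a n) l) < eps.
Proof.
  pose proof (@norm_factor_gt_0 K V) as Hf. unfold is_series. split.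
  - intros H eps Heps. pose proof (proj1 (filterlim_locally (sum_n a) l) H) as H'.
    assert (Hp : 0 < eps / @norm_factor K V) by (apply Rdiv_lt_0_compat; auto).
    destruct (H' (mkposreal _ Hp)) as [N HN]. exists N. intros n Hn.
    specialize (HN n Hn). apply norm_compat2 in HN. simpl in HN.
    replace eps with (@norm_factor K V * (eps / @norm_factor K V)) by (field; lra). auto.
  - intros H. apply (proj2 (filterlim_locally (sum_n a) l)).
    intros eps. destruct (H eps (cond_pos eps)) as [N HN]. exists N. intros n Hn.
    apply norm_compat1. auto.
Qed.

Lemma is_series_C_cvgC a l :
  is_series (V := C_NormedModule) a l <-> cvgC (fun n => csum n a) l.
Proof.
  rewrite is_series_eps. split; intros H eps He; destruct (H eps He) as [N HN].
  - exists (S N). intros n Hn. destruct n. lia.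
    change (Cminus (csum (S n) a) l) with (minus (csum (S n) a) l).
    rewrite <- sum_n_csum. apply HN; lia.
  - exists N. intros n Hn. rewrite sum_n_csum. exact (HN (S n) ltac:(lia)).
Qed.
Lemma is_series_R_cvgR a l :
  is_series (V := R_NormedModule) a l <-> cvgR (fun n => rsum n a) l.
Proof.
  rewrite is_series_eps. split; intros H eps He; destruct (H eps He) as [N HN].
  - exists (S N). intros n Hn. destruct n. lia.
    change (rsum (S n) a - l) with (minus (rsum (S n) a) l).
    rewrite <- sum_n_rsum. apply HN; lia.
  - exists N. intros n Hn. rewrite sum_n_rsum. exact (HN (S n) ltac:(lia)).
Qed.

Lemma cvgC_unique s l1 l2 : cvgC s l1 -> cvgC s l2 -> l1 = l2.
Proof.
  intros H1 H2.
  enough (Hd : Cminus l1 l2 = RtoC 0)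
    by (replace l1 with (Cplus (Cminus l1 l2) l2) by ring; rewrite Hd; ring).
  destruct (Ceq_dec (Cminus l1 l2) (RtoC 0)) as [|ne]; auto. exfalso.
  set (eps := Cmod (Cminus l1 l2)). assert (He : 0 < eps) by (apply Cmod_gt_0; auto).
  destruct (H1 (eps/2) ltac:(lra)) as [N1 HN1], (H2 (eps/2) ltac:(lra)) as [N2 HN2].
  specialize (HN1 (N1+N2)%nat ltac:(lia)). specialize (HN2 (N1+N2)%nat ltac:(lia)).
  pose proof (Cmod_triangle (Cminus (s (N1+N2)%nat) l2) (Copp (Cminus (s (N1+N2)%nat) l1))).
  rewrite Cmod_opp in H.
  replace (Cplus (Cminus (s (N1+N2)%nat) l2) (Copp (Cminus (s (N1+N2)%nat) l1)))
    with (Cminus l1 l2) in H by ring.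
  unfold eps in *. lra.
Qed.

Lemma cvgR_ge_partial a l n : (forall i, 0 <= a i) -> cvgR (fun n => rsum n a) l -> rsum n a <= l.
Proof.
  intros Ha H. destruct (Rle_dec (rsum n a) l); auto. exfalso.
  destruct (H (rsum n a - l) ltac:(lra)) as [N HN]. specialize (HN (N + n)%nat ltac:(lia)).
  pose proof (rsum_mono n (N+n) a Ha ltac:(lia)). apply Rabs_def2 in HN. lra.
Qed.

Lemma cvgR_scal s l c : cvgR s l -> cvgR (fun n => c * s n) (c * l).
Proof.
  intros H eps He. pose proof (Rabs_pos c).
  destruct (H (eps / (Rabs c + 1))) as [N HN]. apply Rdiv_lt_0_compat; lra.
  exists N. intros n Hn. specialize (HN n Hn).
  replace (c * s n - c * l) with (c * (s n - l)) by ring. rewrite Rabs_mult.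
  apply Rle_lt_trans with (Rabs c * (eps / (Rabs c + 1))).
  - apply Rmult_le_compat_l; lra.
  - apply Rmult_lt_reg_r with (Rabs c + 1). lra.
    replace (Rabs c * (eps / (Rabs c + 1)) * (Rabs c + 1)) with (Rabs c * eps) by (field; lra). nra.
Qed.
Lemma cvgC_scal f l c : cvgC (fun n => csum n f) l -> cvgC (fun n => csum n (fun i => Cmult c (f i))) (Cmult c l).
Proof.
  intros H eps He. pose proof (Cmod_ge_0 c).
  destruct (H (eps / (Cmod c + 1))) as [N HN]. apply Rdiv_lt_0_compat; lra.
  exists N. intros n Hn. specialize (HN n Hn). rewrite csum_scal_l.
  replace (Cminus (Cmult c (csum n f)) (Cmult c l)) with (Cmult c (Cminus (csum n f) l)) by ring.
  rewrite Cmod_mult. pose proof (Cmod_ge_0 (Cminus (csum n f) l)).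
  apply Rle_lt_trans with (Cmod c * (eps / (Cmod c + 1))).
  - apply Rmult_le_compat_l; lra.
  - apply Rmult_lt_reg_r with (Cmod c + 1). lra.
    replace (Cmod c * (eps / (Cmod c + 1)) * (Cmod c + 1)) with (Cmod c * eps) by (field; lra). nra.
Qed.
Lemma cvgC_ext f g l : (forall i, f i = g i) -> cvgC (fun n => csum n f) l -> cvgC (fun n => csum n g) l.
Proof. intros E H. replace g with f; auto. apply functional_extensionality; auto. Qed.
Lemma cvgC_RtoC a l : cvgR (fun n => rsum n a) l -> cvgC (fun n => csum n (fun i => RtoC (a i))) (RtoC l).
Proof.
  intros H eps He. destruct (H eps He) as [N HN]. exists N. intros n Hn.
  rewrite csum_RtoC, <- RtoC_minus, Cmod_R. auto.
Qed.

Lemma cvgC_delta k c : cvgC (fun n => csum n (fun m => if Nat.eqb m k then c else RtoC 0)) c.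
Proof.
  intros eps He. exists (S k). intros n Hn. rewrite csum_delta. destruct (Nat.ltb_spec k n); try lia.
  replace (Cminus c c) with (RtoC 0) by ring. rewrite Cmod_0. auto.
Qed.

Lemma cvgC_tail_le (a : nat -> C) l b B M : cvgC (fun n => csum n a) l ->
  (forall p, Cmod (a p) <= b p) -> (forall p, 0 <= b p) -> cvgR (fun n => rsum n b) B ->
  Cmod (Cminus l (csum M a)) <= B - rsum M b.
Proof.
  intros Hl Hab Hb HB.
  assert (Hseg : forall N, (M <= N)%nat ->
            Cmod (Cminus (csum N a) (csum M a)) <= rsum N b - rsum M b).
  { intros N HN. induction HN.
    - replace (Cminus (csum M a) (csum M a)) with (RtoC 0) by ring. rewrite Cmod_0; lra.
    - simpl. replace (Cminus (Cplus (csum m a) (a m)) (csum M a))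
        with (Cplus (Cminus (csum m a) (csum M a)) (a m)) by ring.
      eapply Rle_trans. apply Cmod_triangle. pose proof (Hab m). lra. }
  apply Rnot_lt_le. intros Hlt.
  set (del := Cmod (Cminus l (csum M a)) - (B - rsum M b)).
  destruct (Hl del ltac:(unfold del; lra)) as [N HN].
  specialize (HN (N + M)%nat ltac:(lia)). specialize (Hseg (N + M)%nat ltac:(lia)).
  pose proof (cvgR_ge_partial b B (N+M) Hb HB).
  pose proof (Cmod_triangle (Cminus l (csum (N+M) a)) (Cminus (csum (N+M) a) (csum M a))) as Htri.
  replace (Cplus (Cminus l (csum (N+M) a)) (Cminus (csum (N+M) a) (csum M a)))
    with (Cminus l (csum M a)) in Htri by ring.
  rewrite <- Cmod_opp in HN.
  replace (Copp (Cminus (csum (N + M) a) l)) with (Cminus l (csum (N+M) a)) in HN by ring.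
  unfold del in *. lra.
Qed.
Lemma cvgC_limit_le (a : nat -> C) l b B : cvgC (fun n => csum n a) l ->
  (forall p, Cmod (a p) <= b p) -> (forall p, 0 <= b p) -> cvgR (fun n => rsum n b) B -> Cmod l <= B.
Proof.
  intros. pose proof (cvgC_tail_le a l b B 0 H H0 H1 H2) as Ht. simpl in Ht.
  replace (Cminus l (RtoC 0)) with l in Ht by ring. lra.
Qed.

(** * Iterated integrals over the cube *)

Definition upd (d : nat) (t : R) (th : nat -> R) : nat -> R :=
  fun i => if Nat.eqb i d then t else th i.
Definition dist1 (d : nat) (u v : nat -> R) : R := rsum d (fun i => Rabs (u i - v i)).

Lemma dist1_ge0 d u v : 0 <= dist1 d u v.
Proof. apply rsum_ge0. intros; apply Rabs_pos. Qed.

Lemma dist1_upd_same d t u v : dist1 (S d) (upd d t u) (upd d t v) = dist1 d u v.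
Proof.
  unfold dist1, upd. simpl. rewrite Nat.eqb_refl.
  unfold Rminus. rewrite Rplus_opp_r, Rabs_R0, Rplus_0_r.
  apply rsum_ext. intros i Hi. destruct (Nat.eqb_spec i d); try lia; auto.
Qed.
Lemma dist1_upd_diff d t s u : dist1 (S d) (upd d t u) (upd d s u) = Rabs (t - s).
Proof.
  unfold dist1, upd. simpl. rewrite Nat.eqb_refl.
  rewrite (rsum_ext _ _ (fun _ => 0)), rsum0. ring.
  intros i Hi. destruct (Nat.eqb_spec i d); try lia. unfold Rminus; rewrite Rplus_opp_r; apply Rabs_R0.
Qed.
Lemma dist1_coord d l u v : (l < d)%nat -> Rabs (u l - v l) <= dist1 d u v.
Proof.
  unfold dist1. induction d; intros Hl. lia. simpl.
  destruct (Nat.eq_dec l d).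
  - subst. pose proof (rsum_ge0 d (fun i => Rabs (u i - v i)) (fun i _ => Rabs_pos _)). lra.
  - pose proof (IHd ltac:(lia)). pose proof (Rabs_pos (u d - v d)). lra.
Qed.

Definition lipschitz (d : nat) (f : (nat -> R) -> R) : Prop :=
  exists K, forall u v, Rabs (f u - f v) <= K * dist1 d u v.
Definition bounded_lipschitz (d : nat) (f : (nat -> R) -> R) : Prop :=
  exists K M, forall u v, Rabs (f u) <= M /\ Rabs (f u - f v) <= K * dist1 d u v.

Lemma lipschitz_add d f g : lipschitz d f -> lipschitz d g -> lipschitz d (fun u => f u + g u).
Proof.
  intros [K1 H1] [K2 H2]. exists (K1 + K2). intros u v.
  replace (f u + g u - (f v + g v)) with ((f u - f v) + (g u - g v)) by ring.
  eapply Rle_trans. apply Rabs_triang. specialize (H1 u v); specialize (H2 u v). lra.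
Qed.
Lemma lipschitz_scal d c f : lipschitz d f -> lipschitz d (fun u => c * f u).
Proof.
  intros [K H]. exists (Rabs c * K). intros u v.
  replace (c * f u - c * f v) with (c * (f u - f v)) by ring. rewrite Rabs_mult, Rmult_assoc.
  apply Rmult_le_compat_l; auto. apply Rabs_pos.
Qed.
Lemma lipschitz_const d c : lipschitz d (fun _ => c).
Proof. exists 0. intros u v. unfold Rminus; rewrite Rplus_opp_r, Rabs_R0. pose proof (dist1_ge0 d u v); nra. Qed.
Lemma lipschitz_coord d l : (l < d)%nat -> lipschitz d (fun u => u l).
Proof. intros Hl. exists 1. intros u v. rewrite Rmult_1_l. apply dist1_coord; auto. Qed.

Lemma bounded_lipschitz_ext d f g : (forall u, f u = g u) -> bounded_lipschitz d f -> bounded_lipschitz d g.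
Proof. intros H Hf. replace g with f; auto. apply functional_extensionality; auto. Qed.
Lemma bounded_lipschitz_upd d t f :
  bounded_lipschitz (S d) f -> bounded_lipschitz d (fun u => f (upd d t u)).
Proof.
  intros [K [M H]]. exists K, M. intros u v. destruct (H (upd d t u) (upd d t v)) as [H1 H2].
  rewrite dist1_upd_same in H2; auto.
Qed.
Lemma bounded_lipschitz_const d c : bounded_lipschitz d (fun _ => c).
Proof.
  exists 0, (Rabs c). intros u v. split. lra. unfold Rminus; rewrite Rplus_opp_r, Rabs_R0.
  pose proof (dist1_ge0 d u v). nra.
Qed.
Lemma bounded_lipschitz_add d f g :
  bounded_lipschitz d f -> bounded_lipschitz d g -> bounded_lipschitz d (fun u => f u + g u).
Proof.
  intros [K1 [M1 H1]] [K2 [M2 H2]]. exists (K1 + K2), (M1 + M2). intros u v.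
  destruct (H1 u v) as [A1 B1], (H2 u v) as [A2 B2]. split.
  - eapply Rle_trans. apply Rabs_triang. lra.
  - replace (f u + g u - (f v + g v)) with ((f u - f v) + (g u - g v)) by ring.
    eapply Rle_trans. apply Rabs_triang. lra.
Qed.
Lemma bounded_lipschitz_scal d c f : bounded_lipschitz d f -> bounded_lipschitz d (fun u => c * f u).
Proof.
  intros [K [M H]]. exists (Rabs c * K), (Rabs c * M). intros u v.
  destruct (H u v) as [A B]. split.
  - rewrite Rabs_mult. apply Rmult_le_compat_l; auto. apply Rabs_pos.
  - replace (c * f u - c * f v) with (c * (f u - f v)) by ring. rewrite Rabs_mult, Rmult_assoc.
    apply Rmult_le_compat_l; auto. apply Rabs_pos.
Qed.
Lemma bounded_lipschitz_mul d f g :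
  bounded_lipschitz d f -> bounded_lipschitz d g -> bounded_lipschitz d (fun u => f u * g u).
Proof.
  intros [K1 [M1 H1]] [K2 [M2 H2]]. exists (K1 * M2 + M1 * K2), (M1 * M2). intros u v.
  destruct (H1 u v) as [A1 B1], (H2 u v) as [A2 B2], (H1 v v) as [A1' _].
  pose proof (dist1_ge0 d u v). split.
  - rewrite Rabs_mult. apply Rmult_le_compat; auto; apply Rabs_pos.
  - replace (f u * g u - f v * g v) with ((f u - f v) * g u + f v * (g u - g v)) by ring.
    eapply Rle_trans. apply Rabs_triang. rewrite !Rabs_mult.
    assert (Rabs (f u - f v) * Rabs (g u) <= K1 * dist1 d u v * M2)
      by (apply Rmult_le_compat; auto; apply Rabs_pos).
    assert (Rabs (f v) * Rabs (g u - g v) <= M1 * (K2 * dist1 d u v))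
      by (apply Rmult_le_compat; auto; apply Rabs_pos).
    nra.
Qed.
Lemma bounded_lipschitz_lipschitz d f : bounded_lipschitz d f -> lipschitz d f.
Proof. intros [K [M H]]. exists K. intros u v; apply H. Qed.

Lemma lipschitz_continuous (f : R -> R) L x :
  (forall t s, Rabs (f t - f s) <= L * Rabs (t - s)) -> continuous f x.
Proof.
  intros H. apply continuity_pt_filterlim. intros eps Heps. pose proof (Rabs_pos L).
  exists (eps / (Rabs L + 1)). split. apply Rdiv_lt_0_compat; lra.
  intros y [_ Hy]. simpl in *. unfold R_dist in *.
  eapply Rle_lt_trans. apply H. eapply Rle_lt_trans.
  apply Rmult_le_compat_r. apply Rabs_pos. apply Rle_abs.
  apply Rle_lt_trans with (Rabs L * (eps / (Rabs L + 1))). apply Rmult_le_compat_l; lra.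
  apply Rmult_lt_reg_r with (Rabs L + 1). lra.
  replace (Rabs L * (eps / (Rabs L + 1)) * (Rabs L + 1)) with (Rabs L * eps) by (field; lra). nra.
Qed.

(* The three properties are proved together, since the induction step needs all of them at
   dimension [d] to see that the partial integral in the last variable is Lipschitz,
   hence Riemann integrable. *)
Lemma cube_int_props d : forall f g, bounded_lipschitz d f -> bounded_lipschitz d g ->
  cube_int d (fun u => f u + g u) = cube_int d f + cube_int d g /\
  (forall c, cube_int d (fun u => c * f u) = c * cube_int d f) /\
  (forall M, (forall u, Rabs (f u) <= M) -> Rabs (cube_int d f) <= (2*PI)^d * M).
Proof.
  induction d; intros f g Hf Hg.
  - simpl. split; auto. split; auto. intros M HM. rewrite Rmult_1_l. auto.
  - assert (Hlip : forall h, bounded_lipschitz (S d) h -> exists L, forall t s,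
       Rabs (cube_int d (fun u => h (upd d t u)) - cube_int d (fun u => h (upd d s u)))
         <= L * Rabs (t - s)).
    { intros h [K [M Hh]]. exists ((2*PI)^d * K). intros t s.
      assert (N1 : bounded_lipschitz d (fun u => h (upd d t u)))
        by (apply bounded_lipschitz_upd; exists K, M; auto).
      assert (N2 : bounded_lipschitz d (fun u => h (upd d s u)))
        by (apply bounded_lipschitz_upd; exists K, M; auto).
      assert (N3 : bounded_lipschitz d (fun u => -1 * h (upd d s u)))
        by (apply bounded_lipschitz_scal; auto).
      destruct (IHd _ _ N1 N3) as [E1 _], (IHd _ _ N2 N1) as [_ [E2 _]].
      replace (cube_int d (fun u => h (upd d t u)) - cube_int d (fun u => h (upd d s u)))
        with (cube_int d (fun u => h (upd d t u) + -1 * h (upd d s u))) by (rewrite E1, E2; ring).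
      destruct (IHd _ _ (bounded_lipschitz_add _ _ _ N1 N3) N1) as [_ [_ E3]].
      rewrite Rmult_assoc. apply E3. intros u. destruct (Hh (upd d t u) (upd d s u)) as [_ B].
      rewrite dist1_upd_diff in B.
      replace (h (upd d t u) + -1 * h (upd d s u)) with (h (upd d t u) - h (upd d s u)) by ring. auto. }
    assert (Hex : forall h, bounded_lipschitz (S d) h ->
              ex_RInt (fun t => cube_int d (fun u => h (upd d t u))) 0 (2*PI)).
    { intros h Hh. destruct (Hlip h Hh) as [L HL].
      apply (ex_RInt_continuous (V := R_CompleteNormedModule)). intros z _.
      apply lipschitz_continuous with L. auto. }
    pose proof (bounded_lipschitz_upd d) as Hupd.
    simpl. fold (upd d). split; [|split].
    + rewrite <- (RInt_plus (V := R_CompleteNormedModule)) by (apply Hex; auto).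
      apply RInt_ext. intros t _. apply IHd; apply Hupd; auto.
    + intros c. rewrite <- (RInt_scal (V := R_CompleteNormedModule)) by (apply Hex; auto).
      apply RInt_ext. intros t _. apply (IHd _ _ (Hupd t f Hf) (Hupd t f Hf)).
    + intros M HM. pose proof PI_RGT_0.
      eapply Rle_trans. apply abs_RInt_le_const. lra. apply Hex; auto.
      * intros t _. apply (IHd _ _ (Hupd t f Hf) (Hupd t f Hf)). intros u; apply HM.
      * simpl. lra.
Qed.

Lemma cube_int_plus d f g : bounded_lipschitz d f -> bounded_lipschitz d g ->
  cube_int d (fun u => f u + g u) = cube_int d f + cube_int d g.
Proof. intros. apply cube_int_props; auto. Qed.
Lemma cube_int_scal d c f : bounded_lipschitz d f -> cube_int d (fun u => c * f u) = c * cube_int d f.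
Proof. intros. apply (cube_int_props d f f); auto. Qed.
Lemma cube_int_bound d f M : bounded_lipschitz d f -> (forall u, Rabs (f u) <= M) ->
  Rabs (cube_int d f) <= (2*PI)^d * M.
Proof. intros. apply (cube_int_props d f f); auto. Qed.
Lemma cube_int_ext d f g : (forall u, f u = g u) -> cube_int d f = cube_int d g.
Proof. intros H. replace f with g; auto. apply functional_extensionality; auto. Qed.

Lemma Rabs_sin_le x : Rabs (sin x) <= Rabs x.
Proof.
  assert (H : forall x, 0 <= x -> Rabs (sin x) <= x).
  { intros y Hy. destruct (Req_dec y 0) as [->|]. rewrite sin_0, Rabs_R0; lra.
    pose proof (sin_lt_x y ltac:(lra)). pose proof (SIN_bound y). pose proof PI2_1.
    apply Rabs_le. split; try lra.
    destruct (Rle_dec y 1). pose proof (sin_ge_0 y Hy ltac:(lra)). lra. lra. }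
  destruct (Rle_dec 0 x). rewrite (Rabs_right x) by lra. auto.
  rewrite <- (Rabs_Ropp x), <- (Rabs_Ropp (sin x)), <- sin_neg, (Rabs_right (-x)) by lra.
  apply H; lra.
Qed.
Lemma cos_lipschitz a b : Rabs (cos a - cos b) <= Rabs (a - b).
Proof.
  rewrite form2, !Rabs_mult. pose proof (Rabs_sin_le ((a-b)/2)).
  assert (Rabs (sin ((a + b) / 2)) <= 1) by (apply Rabs_le, SIN_bound).
  replace (Rabs (a - b)) with (Rabs (-2) * Rabs ((a - b)/2) * 1).
  - apply Rmult_le_compat; try apply Rabs_pos; auto.
    + rewrite <- Rabs_mult; apply Rabs_pos.
    + apply Rmult_le_compat_l; auto. apply Rabs_pos.
  - rewrite <- Rabs_mult. replace (-2 * ((a-b)/2)) with (-(a-b)) by field. rewrite Rabs_Ropp; ring.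
Qed.
Lemma sin_lipschitz a b : Rabs (sin a - sin b) <= Rabs (a - b).
Proof.
  rewrite form4, !Rabs_mult. pose proof (Rabs_sin_le ((a-b)/2)).
  assert (Rabs (cos ((a + b) / 2)) <= 1) by (apply Rabs_le, COS_bound).
  replace (Rabs (a - b)) with (Rabs 2 * 1 * Rabs ((a - b)/2)).
  - apply Rmult_le_compat; try apply Rabs_pos; auto.
    + rewrite <- Rabs_mult; apply Rabs_pos.
    + apply Rmult_le_compat_l; auto. apply Rabs_pos.
  - rewrite Rmult_1_r, <- Rabs_mult. f_equal; field.
Qed.

Lemma bounded_lipschitz_cos d f : lipschitz d f -> bounded_lipschitz d (fun u => cos (f u)).
Proof.
  intros [K H]. exists K, 1. intros u v. split. apply Rabs_le, COS_bound.
  eapply Rle_trans. apply cos_lipschitz. auto.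
Qed.
Lemma bounded_lipschitz_sin d f : lipschitz d f -> bounded_lipschitz d (fun u => sin (f u)).
Proof.
  intros [K H]. exists K, 1. intros u v. split. apply Rabs_le, SIN_bound.
  eapply Rle_trans. apply sin_lipschitz. auto.
Qed.

Lemma lipschitz_lin_cos a c :
  exists K, forall s t, Rabs ((a * s + c * cos s) - (a * t + c * cos t)) <= K * Rabs (s - t).
Proof.
  exists (Rabs a + Rabs c). intros s t.
  replace (a * s + c * cos s - (a * t + c * cos t)) with (a * (s - t) + c * (cos s - cos t)) by ring.
  eapply Rle_trans. apply Rabs_triang. rewrite !Rabs_mult.
  pose proof (cos_lipschitz s t). pose proof (Rabs_pos c).
  assert (Rabs c * Rabs (cos s - cos t) <= Rabs c * Rabs (s - t)) by (apply Rmult_le_compat_l; auto).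
  lra.
Qed.

Lemma lipschitz_sumd d F :
  (forall l, exists K, forall s t, Rabs (F l s - F l t) <= K * Rabs (s - t)) ->
  lipschitz d (fun th => sumd d (fun l => F l (th l))).
Proof.
  intros HF. enough (H : forall n, (n <= d)%nat -> lipschitz d (fun th => sumd n (fun l => F l (th l))))
    by (apply H; lia).
  induction n; intros Hn; simpl.
  - apply lipschitz_const.
  - apply lipschitz_add. apply IHn; lia.
    destruct (HF n) as [K H]. exists (Rabs K). intros u v. eapply Rle_trans. apply H.
    eapply Rle_trans. apply Rmult_le_compat_r. apply Rabs_pos. apply Rle_abs.
    apply Rmult_le_compat_l. apply Rabs_pos. apply dist1_coord; lia.
Qed.

Definition bounded_lipschitzC (d : nat) (F : (nat -> R) -> C) : Prop :=
  bounded_lipschitz d (fun u => fst (F u)) /\ bounded_lipschitz d (fun u => snd (F u)).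
Definition cube_intC (d : nat) (F : (nat -> R) -> C) : C :=
  (cube_int d (fun u => fst (F u)), cube_int d (fun u => snd (F u))).

Lemma bounded_lipschitzC_ext d F G : (forall u, F u = G u) ->
  bounded_lipschitzC d F -> bounded_lipschitzC d G.
Proof. intros H Hf. replace G with F; auto. apply functional_extensionality; auto. Qed.
Lemma bounded_lipschitzC_const d c : bounded_lipschitzC d (fun _ => c).
Proof. split; apply bounded_lipschitz_const. Qed.
Lemma bounded_lipschitzC_RtoC d f : bounded_lipschitz d f -> bounded_lipschitzC d (fun u => RtoC (f u)).
Proof. intros H. split; simpl; auto. apply bounded_lipschitz_const. Qed.
Lemma bounded_lipschitzC_add d F G : bounded_lipschitzC d F -> bounded_lipschitzC d G ->
  bounded_lipschitzC d (fun u => Cplus (F u) (G u)).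
Proof. intros [A B] [A' B']. split; simpl; apply bounded_lipschitz_add; auto. Qed.
Lemma bounded_lipschitzC_mul d F G : bounded_lipschitzC d F -> bounded_lipschitzC d G ->
  bounded_lipschitzC d (fun u => Cmult (F u) (G u)).
Proof.
  intros [A B] [A' B']. split; simpl.
  - apply (bounded_lipschitz_ext d (fun u => fst (F u) * fst (G u) + -1 * (snd (F u) * snd (G u)))).
    intros; ring.
    apply bounded_lipschitz_add. apply bounded_lipschitz_mul; auto.
    apply bounded_lipschitz_scal, bounded_lipschitz_mul; auto.
  - apply bounded_lipschitz_add; apply bounded_lipschitz_mul; auto.
Qed.
Lemma bounded_lipschitzC_pow d F j : bounded_lipschitzC d F ->
  bounded_lipschitzC d (fun u => Cpow (F u) j).
Proof.
  intros H. induction j; simpl. apply bounded_lipschitzC_const. apply bounded_lipschitzC_mul; auto.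
Qed.
Lemma bounded_lipschitzC_csum d n F : (forall j, bounded_lipschitzC d (F j)) ->
  bounded_lipschitzC d (fun u => csum n (fun j => F j u)).
Proof.
  intros H. induction n; simpl. apply bounded_lipschitzC_const. apply bounded_lipschitzC_add; auto.
Qed.
Lemma bounded_lipschitzC_cis d f : lipschitz d f -> bounded_lipschitzC d (fun u => cis (f u)).
Proof. intros H. split; simpl. apply bounded_lipschitz_cos; auto. apply bounded_lipschitz_sin; auto. Qed.

Lemma cube_intC_ext d F G : (forall u, F u = G u) -> cube_intC d F = cube_intC d G.
Proof. intros H. replace F with G; auto. apply functional_extensionality; auto. Qed.
Lemma cube_intC_plus d F G : bounded_lipschitzC d F -> bounded_lipschitzC d G ->
  cube_intC d (fun u => Cplus (F u) (G u)) = Cplus (cube_intC d F) (cube_intC d G).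
Proof. intros [A B] [A' B']. unfold cube_intC; simpl. rewrite !cube_int_plus; auto. Qed.
Lemma cube_intC_scal d c F : bounded_lipschitzC d F ->
  cube_intC d (fun u => Cmult c (F u)) = Cmult c (cube_intC d F).
Proof.
  intros [A B]. unfold cube_intC; simpl. destruct c as [a b]. simpl.
  rewrite (cube_int_ext d (fun u => a * fst (F u) - b * snd (F u))
                          (fun u => a * fst (F u) + (-b) * snd (F u))) by (intros; ring).
  rewrite (cube_int_plus d (fun u => a * fst (F u)) (fun u => (-b) * snd (F u))),
          (cube_int_plus d (fun u => a * snd (F u)) (fun u => b * fst (F u))), !cube_int_scal by
    (auto; apply bounded_lipschitz_scal; auto).
  apply injective_projections; simpl; ring.
Qed.
Lemma cube_intC_minus d F G : bounded_lipschitzC d F -> bounded_lipschitzC d G ->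
  cube_intC d (fun u => Cminus (F u) (G u)) = Cminus (cube_intC d F) (cube_intC d G).
Proof.
  intros HF HG. unfold Cminus.
  rewrite (cube_intC_ext d (fun u => Cplus (F u) (Copp (G u)))
                            (fun u => Cplus (F u) (Cmult (RtoC (-1)) (G u)))) by (intros; ring).
  rewrite cube_intC_plus, cube_intC_scal; auto. ring.
  apply bounded_lipschitzC_mul; auto. apply bounded_lipschitzC_const.
Qed.
Lemma cube_intC_csum d n F : (forall j, bounded_lipschitzC d (F j)) ->
  cube_intC d (fun u => csum n (fun j => F j u)) = csum n (fun j => cube_intC d (F j)).
Proof.
  intros H. induction n; simpl.
  - transitivity (cube_intC d (fun _ => Cmult (RtoC 0) (RtoC 0))).
    + apply cube_intC_ext. intros; ring.
    + rewrite cube_intC_scal by apply bounded_lipschitzC_const. ring.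
  - rewrite cube_intC_plus, IHn; auto. apply bounded_lipschitzC_csum; auto.
Qed.

Lemma Rabs_fst_le_Cmod (c : C) : Rabs (fst c) <= Cmod c.
Proof. pose proof (Rmax_Cmod c). pose proof (Rmax_l (Rabs (fst c)) (Rabs (snd c))). lra. Qed.
Lemma Rabs_snd_le_Cmod (c : C) : Rabs (snd c) <= Cmod c.
Proof. pose proof (Rmax_Cmod c). pose proof (Rmax_r (Rabs (fst c)) (Rabs (snd c))). lra. Qed.
Lemma Cmod_le_Rabs_fst_snd (c : C) : Cmod c <= Rabs (fst c) + Rabs (snd c).
Proof.
  destruct c as [a b]. simpl.
  assert (E : (a, b) = Cplus (RtoC a) (Cmult Ci (RtoC b)))
    by (apply injective_projections; simpl; ring).
  rewrite E. eapply Rle_trans. apply Cmod_triangle. rewrite Cmod_mult, Cmod_Ci, !Cmod_R. lra.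
Qed.

Lemma cube_intC_bound d F M : bounded_lipschitzC d F -> (forall u, Cmod (F u) <= M) ->
  Cmod (cube_intC d F) <= 2 * (2*PI)^d * M.
Proof.
  intros [A B] H. eapply Rle_trans. apply Cmod_le_Rabs_fst_snd. unfold cube_intC; simpl.
  assert (Rabs (cube_int d (fun u => fst (F u))) <= (2*PI)^d * M).
  { apply cube_int_bound; auto. intros u; eapply Rle_trans. apply Rabs_fst_le_Cmod. auto. }
  assert (Rabs (cube_int d (fun u => snd (F u))) <= (2*PI)^d * M).
  { apply cube_int_bound; auto. intros u; eapply Rle_trans. apply Rabs_snd_le_Cmod. auto. }
  lra.
Qed.

Lemma cis_add a b : cis (a + b) = Cmult (cis a) (cis b).
Proof.
  unfold cis. apply injective_projections; simpl; [rewrite cos_plus | rewrite sin_plus]; ring.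
Qed.
Lemma cis_0 : cis 0 = RtoC 1.
Proof. unfold cis. rewrite cos_0, sin_0. reflexivity. Qed.
Lemma Cmod_cis t : Cmod (cis t) = 1.
Proof.
  unfold cis, Cmod; simpl.
  replace (cos t * (cos t * 1) + sin t * (sin t * 1)) with 1. apply sqrt_1.
  pose proof (sin2_cos2 t) as H; unfold Rsqr in H; lra.
Qed.
Lemma cis_sumd d F : cis (sumd d F) = Cprodd d (fun l => cis (F l)).
Proof. induction d; simpl. apply cis_0. rewrite cis_add, IHd. auto. Qed.

Definition circle_int (h : R -> C) : C :=
  (RInt (fun t => fst (h t)) 0 (2*PI), RInt (fun t => snd (h t)) 0 (2*PI)).

Definition bounded_lipschitzC1 (h : R -> C) : Prop :=
  exists K M, forall s t, Cmod (h s) <= M /\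
    Rabs (fst (h s) - fst (h t)) <= K * Rabs (s - t) /\
    Rabs (snd (h s) - snd (h t)) <= K * Rabs (s - t).

Lemma bounded_lipschitzC1_cis psi K : (forall s t, Rabs (psi s - psi t) <= K * Rabs (s - t)) ->
  bounded_lipschitzC1 (fun t => cis (psi t)).
Proof.
  intros H. exists K, 1. intros s t. rewrite Cmod_cis. simpl. split; [lra | split].
  - eapply Rle_trans. apply cos_lipschitz. auto.
  - eapply Rle_trans. apply sin_lipschitz. auto.
Qed.

Lemma bounded_lipschitzC_coord d l h : bounded_lipschitzC1 h -> (l < d)%nat ->
  bounded_lipschitzC d (fun u => h (u l)).
Proof.
  intros [K [M H]] Hl. pose proof (dist1_coord d l).
  assert (0 <= K).
  { destruct (H 0 1) as [_ [X _]]. pose proof (Rabs_pos (fst (h 0) - fst (h 1))).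
    replace (Rabs (0 - 1)) with 1 in X by (rewrite Rabs_left; lra). lra. }
  split; exists K, M; intros u v; destruct (H (u l) (v l)) as [A [B1 B2]]; split.
  - eapply Rle_trans. apply Rabs_fst_le_Cmod. auto.
  - eapply Rle_trans. apply B1. apply Rmult_le_compat_l; auto.
  - eapply Rle_trans. apply Rabs_snd_le_Cmod. auto.
  - eapply Rle_trans. apply B2. apply Rmult_le_compat_l; auto.
Qed.

Lemma Cprodd_ext d a b : (forall l, (l < d)%nat -> a l = b l) -> Cprodd d a = Cprodd d b.
Proof. induction d; intros H; simpl; auto. rewrite IHd, H; auto. Qed.

Lemma bounded_lipschitzC_Cprodd d n h : (forall l, bounded_lipschitzC1 (h l)) -> (n <= d)%nat ->
  bounded_lipschitzC d (fun u => Cprodd n (fun l => h l (u l))).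
Proof.
  intros H. induction n; intros Hn; simpl. apply bounded_lipschitzC_const.
  apply bounded_lipschitzC_mul. apply IHn; lia. apply bounded_lipschitzC_coord; auto.
Qed.

Lemma bounded_lipschitzC1_ex_RInt (h : R -> C) : bounded_lipschitzC1 h ->
  ex_RInt (fun t => fst (h t)) 0 (2*PI) /\ ex_RInt (fun t => snd (h t)) 0 (2*PI).
Proof.
  intros [K [M H]]. split; apply (ex_RInt_continuous (V := R_CompleteNormedModule)); intros z _;
  apply lipschitz_continuous with K; intros; apply H.
Qed.

Lemma cube_intC_Cprodd d h : (forall l, bounded_lipschitzC1 (h l)) ->
  cube_intC d (fun u => Cprodd d (fun l => h l (u l))) = Cprodd d (fun l => circle_int (h l)).
Proof.
  intros H. induction d; [reflexivity|].
  set (Pi := Cprodd d (fun l => circle_int (h l))).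
  assert (Hslice : forall t, cube_intC d (fun u => Cprodd (S d) (fun l => h l (upd d t u l)))
                             = Cmult (h d t) Pi).
  { intros t. unfold Pi. rewrite <- IHd, <- cube_intC_scal by (apply bounded_lipschitzC_Cprodd; auto).
    apply cube_intC_ext. intros u. simpl.
    unfold upd at 2. rewrite Nat.eqb_refl, Cmult_comm. f_equal.
    apply Cprodd_ext. intros l Hl. unfold upd. destruct (Nat.eqb_spec l d); try lia; auto. }
  destruct (bounded_lipschitzC1_ex_RInt (h d) (H d)) as [E1 E2].
  unfold cube_intC. simpl. fold (upd d).
  rewrite (RInt_ext (V := R_CompleteNormedModule) _
             (fun t => fst Pi * fst (h d t) + (- snd Pi) * snd (h d t))),
          (RInt_ext (V := R_CompleteNormedModule)
             (fun t => cube_int d (fun th => snd (Cprodd (S d) (fun l => h l (upd d t th l)))))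
             (fun t => snd Pi * fst (h d t) + fst Pi * snd (h d t))).
  - rewrite !(RInt_plus (V := R_CompleteNormedModule))
      by (apply (ex_RInt_scal (V := R_CompleteNormedModule)); auto).
    rewrite !(RInt_scal (V := R_CompleteNormedModule)) by auto.
    unfold Pi, circle_int. apply injective_projections; simpl;
      unfold scal, plus; simpl; unfold mult, plus; simpl; ring.
  - intros t _. change (cube_int d _) with (snd (cube_intC d (fun u => Cprodd (S d) (fun l => h l (upd d t u l))))).
    rewrite Hslice. simpl; ring.
  - intros t _. change (cube_int d _) with (fst (cube_intC d (fun u => Cprodd (S d) (fun l => h l (upd d t u l))))).
    rewrite Hslice. simpl; ring.
Qed.

Definition exp_term (z : R) (j : nat) : R := z ^ j / INR (fact j).
Definition cexp_term (t : R) (j : nat) : C :=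
  Cmult (Cpow (Cmult Ci (RtoC t)) j) (RtoC (/ INR (fact j))).

Lemma INR_fact_gt0 n : 0 < INR (fact n).
Proof. apply lt_0_INR, lt_O_fact. Qed.

Lemma exp_term_ge0 z j : 0 <= z -> 0 <= exp_term z j.
Proof. intros. unfold exp_term. apply Rdiv_le_0_compat. apply pow_le; auto. apply INR_fact_gt0. Qed.

Lemma exp_term_cvg z : cvgR (fun n => rsum n (exp_term z)) (exp z).
Proof.
  apply is_series_R_cvgR. eapply is_series_ext. 2: exact (is_exp_Reals z). intros n. simpl.
  rewrite pow_n_pow. unfold scal; simpl; unfold mult; simpl. unfold exp_term. field.
  apply not_0_INR, fact_neq_0.
Qed.

Lemma cvgR_exp_term_scal z c : cvgR (fun n => rsum n (fun p => c * exp_term z p)) (c * exp z).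
Proof.
  intros eps He. destruct (cvgR_scal _ _ c (exp_term_cvg z) eps He) as [N HN]. exists N.
  intros n Hn. rewrite rsum_scal_l. apply HN; auto.
Qed.

Lemma rsum_exp_term_le z N : 0 <= z -> rsum N (exp_term z) <= exp z.
Proof. intros Hz. apply (cvgR_ge_partial _ _ N (fun i => exp_term_ge0 z i Hz) (exp_term_cvg z)). Qed.
Lemma exp_tail_ge0 z K : 0 <= z -> 0 <= exp z - rsum K (exp_term z).
Proof. intros Hz. pose proof (rsum_exp_term_le z K Hz). lra. Qed.
Lemma exp_term_le_exp z p : 0 <= z -> exp_term z p <= exp z.
Proof.
  intros Hz. pose proof (rsum_exp_term_le z (S p) Hz). simpl in H.
  pose proof (rsum_ge0 p (exp_term z) (fun i _ => exp_term_ge0 z i Hz)). lra.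
Qed.
Lemma exp_tail_small z eps : 0 < eps ->
  exists N, forall n, (N <= n)%nat -> exp z - rsum n (exp_term z) < eps.
Proof.
  intros He. destruct (exp_term_cvg z eps He) as [N HN]. exists N. intros n Hn.
  specialize (HN n Hn). apply Rabs_def2 in HN. lra.
Qed.

Lemma fact_mul_le p m : (fact p * fact m <= fact (p + m))%nat.
Proof.
  induction m. rewrite Nat.add_0_r. simpl. lia.
  replace (p + S m)%nat with (S (p + m)) by lia. simpl fact. nia.
Qed.
Lemma exp_term_add z p m : 0 <= z -> exp_term z (p + m) <= exp_term z p * exp_term z m.
Proof.
  intros Hz. unfold exp_term. rewrite pow_add.
  pose proof (INR_fact_gt0 p). pose proof (INR_fact_gt0 m). pose proof (INR_fact_gt0 (p+m)).
  pose proof (le_INR _ _ (fact_mul_le p m)) as Hf. rewrite mult_INR in Hf.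
  replace (z ^ p / INR (fact p) * (z ^ m / INR (fact m)))
    with (z ^ p * z ^ m / (INR (fact p) * INR (fact m))) by (field; lra).
  unfold Rdiv. apply Rmult_le_compat_l. apply Rmult_le_pos; apply pow_le; auto.
  apply Rinv_le_contravar; auto. nra.
Qed.
Lemma exp_term_S z n : 0 <= z -> exp_term z (S n) <= z * exp_term z n.
Proof.
  intros Hz. replace (S n) with (n + 1)%nat by lia. eapply Rle_trans. apply exp_term_add; auto.
  unfold exp_term at 2. simpl. replace (z * 1 / 1) with z by field. rewrite Rmult_comm. lra.
Qed.

Lemma Cmod_cexp_term_le t z j : Rabs t <= z -> Cmod (cexp_term t j) <= exp_term z j.
Proof.
  intros Ht. pose proof (INR_fact_gt0 j).
  unfold cexp_term, exp_term. rewrite Cmod_mult, Cmod_pow, Cmod_mult, Cmod_Ci, !Cmod_R, Rmult_1_l.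
  rewrite (Rabs_right (/ INR (fact j))) by (left; apply Rinv_0_lt_compat; auto).
  apply Rmult_le_compat_r. left; apply Rinv_0_lt_compat; auto.
  apply pow_incr. split; auto. apply Rabs_pos.
Qed.

(* The even partial sums of [cexp_term t] are the partial sums of Stdlib's series for
   [cos] and [sin] (the latter in the variable [t^2], multiplied by [t]). *)
Lemma csum_cexp_term t N :
  csum (2 * N) (cexp_term t) =
    (rsum N (fun n => cos_n n * (t²)^n), t * rsum N (fun n => sin_n n * (t²)^n)) /\
  csum (2 * N + 1) (cexp_term t) =
    (rsum (S N) (fun n => cos_n n * (t²)^n), t * rsum N (fun n => sin_n n * (t²)^n)).
Proof.
  assert (Hsq : Cpow (Cmult Ci (RtoC t)) 2 = RtoC (-1 * t²))
    by (apply injective_projections; unfold Rsqr; simpl; ring).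
  assert (Heven : forall n, cexp_term t (2 * n) = RtoC (cos_n n * (t²) ^ n)).
  { intros n. unfold cexp_term. rewrite Cpow_mult_r, Hsq, <- RtoC_pow, <- RtoC_mult. f_equal.
    unfold cos_n. rewrite Rpow_mult_distr. unfold Rdiv. ring. }
  assert (Hodd : forall n, cexp_term t (2 * n + 1) = (0, t * (sin_n n * (t²) ^ n))).
  { intros n. unfold cexp_term. rewrite Cpow_add_r, Cpow_mult_r, Hsq, <- RtoC_pow, Cpow_1_r.
    unfold sin_n. rewrite Rpow_mult_distr. apply injective_projections; simpl; unfold Rdiv; ring. }
  induction N as [|N [IHe IHo]].
  - split; apply injective_projections; unfold cexp_term, cos_n; simpl; field.
  - assert (E : csum (2 * S N) (cexp_term t) =
                Cplus (csum (2 * N + 1) (cexp_term t)) (cexp_term t (2 * N + 1))).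
    { replace (2 * S N)%nat with (S (2 * N + 1)) by lia. reflexivity. }
    assert (E' : csum (2 * S N + 1) (cexp_term t) =
                 Cplus (csum (2 * S N) (cexp_term t)) (cexp_term t (2 * S N))).
    { replace (2 * S N + 1)%nat with (S (2 * S N)) by lia. reflexivity. }
    rewrite E', E, IHo, Hodd, Heven. split; apply injective_projections; simpl; ring.
Qed.

Lemma cvgR_div2 u l k : cvgR u l -> cvgR (fun n => u (Nat.div2 (n + k))) l.
Proof.
  intros H eps He. destruct (H eps He) as [N HN]. exists (2 * N)%nat. intros n Hn. apply HN.
  pose proof (Nat.div2_odd (n + k)). destruct (Nat.odd (n + k)); simpl in *; lia.
Qed.

Lemma cvgC_components s a b :
  cvgR (fun n => fst (s n)) a -> cvgR (fun n => snd (s n)) b -> cvgC s (a, b).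
Proof.
  intros Ha Hb eps He. destruct (Ha (eps/2) ltac:(lra)) as [N1 H1], (Hb (eps/2) ltac:(lra)) as [N2 H2].
  exists (N1 + N2)%nat. intros n Hn. eapply Rle_lt_trans. apply Cmod_le_Rabs_fst_snd.
  specialize (H1 n ltac:(lia)). specialize (H2 n ltac:(lia)). simpl. unfold Rminus in *. lra.
Qed.

Lemma cis_series t : cvgC (fun n => csum n (cexp_term t)) (cis t).
Proof.
  assert (Hsplit : forall n, csum n (cexp_term t) =
    (rsum (Nat.div2 (n + 1)) (fun n => cos_n n * (t²)^n),
     t * rsum (Nat.div2 n) (fun n => sin_n n * (t²)^n))).
  { intros n. destruct (Nat.Even_or_Odd n) as [[N ->] | [N ->]].
    - rewrite Nat.add_1_r, Nat.div2_succ_double, Nat.div2_double. apply csum_cexp_term.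
    - replace (2 * N + 1 + 1)%nat with (2 * S N)%nat by lia.
      rewrite Nat.add_1_r, Nat.div2_double, Nat.div2_succ_double, <- Nat.add_1_r.
      apply csum_cexp_term. }
  unfold cis. apply cvgC_components.
  - replace (fun n => fst (csum n (cexp_term t)))
      with (fun n => rsum (Nat.div2 (n + 1)) (fun n => cos_n n * (t²)^n))
      by (apply functional_extensionality; intros; rewrite Hsplit; reflexivity).
    apply (cvgR_div2 (fun N => rsum N _)), is_series_R_cvgR, is_series_Reals.
    unfold cos. destruct (exist_cos (t²)). auto.
  - replace (fun n => snd (csum n (cexp_term t)))
      with (fun n => t * rsum (Nat.div2 (n + 0)) (fun n => sin_n n * (t²)^n))
      by (apply functional_extensionality; intros; rewrite Hsplit, Nat.add_0_r; reflexivity).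
    unfold sin. destruct (exist_sin (t²)) as [s Hs].
    apply cvgR_scal, (cvgR_div2 (fun N => rsum N _)), is_series_R_cvgR, is_series_Reals. auto.
Qed.

Lemma cis_tail t z N : Rabs t <= z ->
  Cmod (Cminus (cis t) (csum N (cexp_term t))) <= exp z - rsum N (exp_term z).
Proof.
  intros Ht. assert (Hz : 0 <= z) by (pose proof (Rabs_pos t); lra).
  apply cvgC_tail_le; auto using cis_series, exp_term_cvg.
  - intros; apply Cmod_cexp_term_le; auto.
  - intros; apply exp_term_ge0; auto.
Qed.

(** * Jacobi–Anger expansion *)

(* [(2 cos w)^j / j! = sum_(p <= j) e^{i (j - 2p) w} / (p! (j-p)!)]. *)
Definition binom_fact (j p : nat) : R := / (INR (fact p) * INR (fact (j - p))).

Lemma binom_fact_S j p : (p <= S j)%nat ->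
  binom_fact (S j) p =
    / INR (S j) * ((if Nat.leb p j then binom_fact j p else 0) +
                   (match p with O => 0 | S q => binom_fact j q end)).
Proof.
  intros Hp. unfold binom_fact. pose proof (INR_fact_gt0 j). pose proof (lt_0_INR (S j) ltac:(lia)).
  destruct p as [|q].
  - simpl Nat.leb. rewrite Nat.sub_0_r. simpl fact at 1 3. rewrite Nat.sub_0_r.
    change (fact (S j)) with (S j * fact j)%nat. rewrite mult_INR. change (INR 1) with 1.
    field. lra.
  - destruct (Nat.leb_spec (S q) j).
    + replace (S j - S q)%nat with (S (j - S q)) by lia.
      replace (j - q)%nat with (S (j - S q)) by lia.
      set (r := (j - S q)%nat). assert (Ej : j = (q + r + 1)%nat) by lia.
      change (fact (S q)) with (S q * fact q)%nat. change (fact (S r)) with (S r * fact r)%nat.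
      rewrite !mult_INR. pose proof (INR_fact_gt0 q). pose proof (INR_fact_gt0 r).
      rewrite Ej, !S_INR, !plus_INR. simpl INR. pose proof (pos_INR q); pose proof (pos_INR r).
      field. repeat split; lra.
    + assert (q = j) by lia. subst q. rewrite Nat.sub_diag. replace (S j - S j)%nat with O by lia.
      change (fact (S j)) with (S j * fact j)%nat. rewrite mult_INR.
      simpl fact. rewrite Nat.sub_diag. simpl fact. change (INR 1) with 1. field. lra.
Qed.

Lemma cos_pow_expand w j : RtoC ((2 * cos w) ^ j / INR (fact j)) =
  csum (S j) (fun p => Cmult (RtoC (binom_fact j p)) (cis ((INR j - 2 * INR p) * w))).
Proof.
  induction j.
  - simpl. unfold binom_fact. simpl. replace ((0 - 2 * 0) * w) with 0 by ring. rewrite cis_0.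
    apply injective_projections; simpl; field.
  - set (term := fun (j p : nat) (s : R) =>
                   Cmult (RtoC (binom_fact j p)) (cis ((INR j + s - 2 * INR p) * w))).
    assert (Hrec : RtoC ((2 * cos w) ^ S j / INR (fact (S j))) =
              Cmult (RtoC (/ INR (S j))) (Cplus (csum (S j) (fun p => term j p 1))
                                                (csum (S j) (fun p => term j p (-1))))).
    { replace ((2 * cos w) ^ S j / INR (fact (S j)))
        with (/ INR (S j) * ((2 * cos w) * ((2 * cos w) ^ j / INR (fact j)))).
      2:{ change (fact (S j)) with (S j * fact j)%nat. rewrite mult_INR. simpl pow.
          pose proof (INR_fact_gt0 j). pose proof (lt_0_INR (S j) ltac:(lia)). field. lra. }
      rewrite !RtoC_mult, IHj. f_equal.
      replace (Cmult (RtoC 2) (RtoC (cos w))) with (Cplus (cis w) (cis (-w))).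
      2:{ unfold cis. rewrite cos_neg, sin_neg. apply injective_projections; simpl; ring. }
      rewrite <- !csum_scal_l, <- csum_add. apply csum_ext. intros p _. unfold term.
      replace ((INR j + 1 - 2 * INR p) * w) with (w + (INR j - 2 * INR p) * w) by ring.
      replace ((INR j + -1 - 2 * INR p) * w) with (-w + (INR j - 2 * INR p) * w) by ring.
      rewrite !cis_add. ring. }
    rewrite Hrec.
    rewrite (csum_ext (S (S j)) _ (fun p => Cmult (RtoC (/ INR (S j))) (Cplus
       (Cmult (RtoC (if Nat.leb p j then binom_fact j p else 0)) (cis ((INR (S j) - 2 * INR p) * w)))
       (Cmult (RtoC (match p with O => 0 | S q => binom_fact j q end))
              (cis ((INR (S j) - 2 * INR p) * w)))))).
    2:{ intros p Hp. rewrite binom_fact_S by lia. rewrite !RtoC_mult, RtoC_plus. ring. }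
    rewrite csum_scal_l, csum_add. f_equal. f_equal.
    + change (csum (S (S j)) ?f) with (Cplus (csum (S j) f) (f (S j))).
      cbv beta. replace (Nat.leb (S j) j) with false by (symmetry; apply Nat.leb_gt; lia).
      replace (Cmult (RtoC 0) (cis ((INR (S j) - 2 * INR (S j)) * w))) with (RtoC 0) by ring.
      rewrite Cplus_0_r. apply csum_ext. intros p Hp. unfold term.
      replace (Nat.leb p j) with true by (symmetry; apply Nat.leb_le; lia). rewrite S_INR. reflexivity.
    + rewrite (csum_shift (S j)).
      replace (Cmult (RtoC 0) (cis ((INR (S j) - 2 * INR 0) * w))) with (RtoC 0) by ring.
      rewrite Cplus_0_l. apply csum_ext. intros p Hp. unfold term.
      rewrite !S_INR. do 3 f_equal. ring.
Qed.

Lemma cexp_term_cos_expand u w j : cexp_term (2 * u * cos w) j =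
  csum (S j) (fun p => Cmult (Cmult (Cpow (Cmult Ci (RtoC u)) j) (RtoC (binom_fact j p)))
                             (cis ((INR j - 2 * INR p) * w))).
Proof.
  unfold cexp_term.
  replace (Cmult Ci (RtoC (2 * u * cos w))) with (Cmult (Cmult Ci (RtoC u)) (RtoC (2 * cos w)))
    by (apply injective_projections; simpl; ring).
  rewrite Cpow_mult_l, <- RtoC_pow.
  transitivity (Cmult (Cpow (Cmult Ci (RtoC u)) j) (RtoC ((2 * cos w) ^ j / INR (fact j)))).
  { unfold Rdiv. rewrite RtoC_mult. ring. }
  rewrite cos_pow_expand, <- csum_scal_l. apply csum_ext. intros p _. ring.
Qed.

(** * Rearranging a double series *)

Local Open Scope bool_scope.

Definition masked_sum (T : nat -> nat -> C) N (w : nat -> nat -> bool) : C :=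
  csum N (fun p => csum N (fun q => if w p q then T p q else RtoC 0)).
Definition square_sum (T : nat -> nat -> C) K : C := csum K (fun p => csum K (fun q => T p q)).
Definition diag_sum (T : nat -> nat -> C) N : C :=
  csum N (fun j => csum (S j) (fun p => T p (j - p)%nat)).
Definition upper_sum (T : nat -> nat -> C) M : C := csum M (fun m => csum M (fun p => T p (p + m)%nat)).
Definition lower_sum (T : nat -> nat -> C) M : C :=
  csum M (fun n => csum M (fun q => T (q + n + 1)%nat q)).

Lemma masked_sum_square T K N : (K <= N)%nat ->
  masked_sum T N (fun p q => Nat.ltb p K && Nat.ltb q K) = square_sum T K.
Proof.
  intros HK. unfold masked_sum, square_sum. rewrite (csum_pad K N); [| auto |].
  - apply csum_ext. intros p Hp. rewrite (csum_pad K N); auto.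
    + apply csum_ext. intros q Hq. destruct (Nat.ltb_spec p K), (Nat.ltb_spec q K); try lia; auto.
    + intros q Hq. destruct (Nat.ltb_spec q K); try lia. rewrite Bool.andb_false_r; auto.
  - intros p Hp. rewrite (csum_ext _ _ (fun _ => RtoC 0)), csum0; auto.
    intros q _. destruct (Nat.ltb_spec p K); try lia. auto.
Qed.

Lemma masked_sum_disjoint T N w1 w2 : (forall p q, w1 p q && w2 p q = false) ->
  Cplus (masked_sum T N w1) (masked_sum T N w2) = masked_sum T N (fun p q => w1 p q || w2 p q).
Proof.
  intros H. unfold masked_sum. rewrite <- csum_add. apply csum_ext. intros p _.
  rewrite <- csum_add. apply csum_ext. intros q _.
  specialize (H p q). destruct (w1 p q), (w2 p q); simpl in *; try discriminate; ring.
Qed.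

Lemma diag_sum_masked T N : diag_sum T N = masked_sum T N (fun p q => Nat.ltb (p + q) N).
Proof.
  induction N; [reflexivity|].
  change (diag_sum T (S N)) with (Cplus (diag_sum T N) (csum (S N) (fun p => T p (N - p)%nat))).
  rewrite IHN. unfold masked_sum.
  rewrite (csum_ext (S N) (fun p => csum (S N) (fun q => if Nat.ltb (p + q) (S N) then T p q else RtoC 0))
     (fun p => Cplus (csum (S N) (fun q => if Nat.ltb (p + q) N then T p q else RtoC 0))
                     (csum (S N) (fun q => if Nat.eqb q (N - p) then T p q else RtoC 0)))).
  - rewrite csum_add. f_equal.
    + symmetry. rewrite (csum_pad N (S N)) by (auto; intros p Hp;
        rewrite (csum_ext _ _ (fun _ => RtoC 0)), csum0; auto;
        intros q _; destruct (Nat.ltb_spec (p+q) N); auto; lia).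
      apply csum_ext. intros p Hp. apply csum_pad. lia.
      intros q Hq. destruct (Nat.ltb_spec (p+q) N); auto; lia.
    + apply csum_ext. intros p Hp. rewrite csum_delta. destruct (Nat.ltb_spec (N - p) (S N)); auto; lia.
  - intros p Hp. rewrite <- csum_add. apply csum_ext. intros q Hq.
    destruct (Nat.ltb_spec (p+q) (S N)), (Nat.ltb_spec (p+q) N), (Nat.eqb_spec q (N - p));
      try lia; ring.
Qed.

Lemma csum_window (f : nat -> C) p M N : (p + M <= N)%nat ->
  csum M (fun m => f (p + m)%nat) =
  csum N (fun q => if Nat.leb p q && Nat.ltb q (p + M) then f q else RtoC 0).
Proof.
  induction M; intros H.
  - simpl. rewrite (csum_ext _ _ (fun _ => RtoC 0)). symmetry; apply csum0.
    intros q _. destruct (Nat.leb_spec p q), (Nat.ltb_spec q (p + 0)); simpl; auto; lia.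
  - simpl. rewrite IHM by lia.
    rewrite (csum_ext N (fun q => if Nat.leb p q && Nat.ltb q (p + S M) then f q else RtoC 0)
       (fun q => Cplus (if Nat.leb p q && Nat.ltb q (p + M) then f q else RtoC 0)
                       (if Nat.eqb q (p + M) then f q else RtoC 0))).
    + rewrite csum_add, csum_delta. destruct (Nat.ltb_spec (p + M) N); try lia. auto.
    + intros q _. destruct (Nat.leb_spec p q), (Nat.ltb_spec q (p + S M)), (Nat.ltb_spec q (p + M)),
        (Nat.eqb_spec q (p + M)); simpl; try lia; try ring.
Qed.

Lemma upper_sum_masked T M : upper_sum T M =
  masked_sum T (2 * M + 1) (fun p q => Nat.ltb p M && (Nat.leb p q && Nat.ltb q (p + M))).
Proof.
  unfold upper_sum, masked_sum. rewrite csum_swap, (csum_pad M (2 * M + 1)); try lia.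
  - apply csum_ext. intros p Hp. rewrite (csum_window (fun q => T p q) p M (2 * M + 1)) by lia.
    apply csum_ext. intros q _. destruct (Nat.ltb_spec p M); try lia. reflexivity.
  - intros p Hp. rewrite (csum_ext _ _ (fun _ => RtoC 0)), csum0; auto.
    intros q _. destruct (Nat.ltb_spec p M); auto; lia.
Qed.

Lemma lower_sum_masked T M : lower_sum T M =
  masked_sum T (2 * M + 1) (fun p q => Nat.ltb q M && (Nat.leb (q + 1) p && Nat.ltb p (q + 1 + M))).
Proof.
  set (w := fun p q => Nat.ltb q M && (Nat.leb (q + 1) p && Nat.ltb p (q + 1 + M))).
  unfold lower_sum, masked_sum. rewrite csum_swap.
  rewrite (csum_ext M _ (fun q => csum (2 * M + 1) (fun p => if w p q then T p q else RtoC 0))).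
  - rewrite <- (csum_pad M (2 * M + 1) (fun q => csum (2 * M + 1)
                  (fun p => if w p q then T p q else RtoC 0))).
    + apply csum_swap.
    + lia.
    + intros q Hq. rewrite (csum_ext _ _ (fun _ => RtoC 0)), csum0; auto.
      intros p _. unfold w. destruct (Nat.ltb_spec q M); auto; lia.
  - intros q Hq. rewrite (csum_ext M _ (fun n => T (q + 1 + n)%nat q)) by (intros; f_equal; lia).
    rewrite (csum_window (fun p => T p q) (q + 1) M (2 * M + 1)) by lia.
    apply csum_ext. intros p _. unfold w. destruct (Nat.ltb_spec q M); try lia. reflexivity.
Qed.

Lemma rsum_from N K e : (K <= N)%nat ->
  rsum N (fun p => if Nat.leb K p then e p else 0) = rsum N e - rsum K e.
Proof.
  intros H. induction H.
  - rewrite (rsum_ext _ _ (fun _ => 0)), rsum0. ring. intros i Hi. destruct (Nat.leb_spec K i); auto; lia.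
  - simpl. rewrite IHle. destruct (Nat.leb_spec K m); try lia. ring.
Qed.

Lemma Rmult_ge0_3 a b c : 0 <= a -> 0 <= b -> 0 <= c -> 0 <= a * b * c.
Proof. intros. repeat apply Rmult_le_pos; auto. Qed.

Section DoubleSeries.

Variables (T : nat -> nat -> C) (A z : R).
Hypotheses (HA : 0 <= A) (Hz : 0 <= z)
  (HT : forall p q, Cmod (T p q) <= A * exp_term z p * exp_term z q).

Let tail K := exp z - rsum K (exp_term z).

Lemma masked_sum_square_err K N w : (K <= N)%nat ->
  (forall p q, (p < K)%nat -> (q < K)%nat -> w p q = true) ->
  Cmod (Cminus (masked_sum T N w) (square_sum T K)) <= 2 * A * exp z * tail K.
Proof.
  intros HK Hw. rewrite <- (masked_sum_square T K N HK). unfold masked_sum. rewrite <- csum_sub.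
  set (x := fun p => if Nat.leb K p then exp_term z p else 0).
  assert (Hx : forall p, 0 <= x p).
  { intros p. unfold x. destruct (Nat.leb K p). apply exp_term_ge0; auto. lra. }
  assert (He : forall p, 0 <= exp_term z p) by (intros; apply exp_term_ge0; auto).
  assert (Hxsum : rsum N x <= tail K).
  { unfold x, tail. rewrite rsum_from by auto. pose proof (rsum_exp_term_le z N Hz). lra. }
  eapply Rle_trans. apply Cmod_csum_le.
  eapply Rle_trans. apply rsum_le. intros p _. rewrite <- csum_sub. apply Cmod_csum_le.
  (* Off the square [p, q < K] one index is [>= K], and [x] bounds that factor by its tail. *)
  apply Rle_trans with (rsum N (fun p => rsum N (fun q => A * exp_term z p * x q + A * x p * exp_term z q))).
  - apply rsum_le. intros p _. apply rsum_le. intros q _.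
    pose proof (He p); pose proof (He q). pose proof (HT p q).
    assert (0 <= A * exp_term z p * exp_term z q) by (apply Rmult_ge0_3; auto).
    unfold x. destruct (Nat.ltb_spec p K), (Nat.ltb_spec q K), (Nat.leb_spec K p), (Nat.leb_spec K q);
      try lia; simpl; try rewrite Hw by auto; try destruct (w p q);
      repeat match goal with |- context [Cminus ?a (RtoC 0)] =>
                               replace (Cminus a (RtoC 0)) with a by ring end;
      try (replace (Cminus (T p q) (T p q)) with (RtoC 0) by ring);
      try rewrite Cmod_0; try nra.
  - rewrite (rsum_ext _ _ (fun p => (A * rsum N x) * exp_term z p + (A * rsum N (exp_term z)) * x p))
      by (intros p _; transitivity (A * exp_term z p * rsum N x + A * x p * rsum N (exp_term z));
          [rewrite <- !rsum_scal_l, <- rsum_add; apply rsum_ext; intros; ring | ring]).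
    rewrite rsum_add, !rsum_scal_l.
    pose proof (rsum_exp_term_le z N Hz). pose proof (exp_tail_ge0 z K Hz).
    pose proof (rsum_ge0 N x (fun i _ => Hx i)). pose proof (rsum_ge0 N (exp_term z) (fun i _ => He i)).
    assert (A * rsum N x * rsum N (exp_term z) <= A * exp z * tail K).
    { rewrite Rmult_assoc, (Rmult_assoc A (exp z)). apply Rmult_le_compat_l; auto.
      rewrite Rmult_comm. apply Rmult_le_compat; auto. }
    nra.
Qed.

Lemma upper_row_majorant m p :
  Cmod (T p (p + m)%nat) <= (A * exp z * exp_term z m) * exp_term z p.
Proof.
  eapply Rle_trans. apply HT. pose proof (exp_term_add z p m Hz). pose proof (exp_term_le_exp z p Hz).
  pose proof (exp_term_ge0 z p Hz). pose proof (exp_term_ge0 z m Hz). pose proof (exp_term_ge0 z (p+m) Hz).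
  apply Rle_trans with (A * exp_term z p * (exp_term z p * exp_term z m)).
  - apply Rmult_le_compat_l; auto. apply Rmult_le_pos; auto.
  - replace (A * exp_term z p * (exp_term z p * exp_term z m))
      with ((A * exp_term z m * exp_term z p) * exp_term z p) by ring.
    replace (A * exp z * exp_term z m * exp_term z p)
      with ((A * exp_term z m * exp_term z p) * exp z) by ring.
    apply Rmult_le_compat_l; auto. apply Rmult_ge0_3; auto.
Qed.

Lemma lower_row_majorant n q :
  Cmod (T (q + n + 1)%nat q) <= (A * exp z * z * exp_term z n) * exp_term z q.
Proof.
  eapply Rle_trans. apply HT. replace (q + n + 1)%nat with (q + S n)%nat by lia.
  pose proof (exp_term_add z q (S n) Hz). pose proof (exp_term_le_exp z q Hz).
  pose proof (exp_term_S z n Hz). pose proof (exp_term_ge0 z q Hz). pose proof (exp_term_ge0 z n Hz).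
  pose proof (exp_term_ge0 z (S n) Hz). pose proof (exp_term_ge0 z (q + S n) Hz).
  apply Rle_trans with (A * (exp_term z q * (z * exp_term z n)) * exp_term z q).
  - apply Rmult_le_compat_r; auto. apply Rmult_le_compat_l; auto. eapply Rle_trans; eauto.
    apply Rmult_le_compat_l; auto.
  - replace (A * (exp_term z q * (z * exp_term z n)) * exp_term z q)
      with ((A * z * exp_term z n * exp_term z q) * exp_term z q) by ring.
    replace (A * exp z * z * exp_term z n * exp_term z q)
      with ((A * z * exp_term z n * exp_term z q) * exp z) by ring.
    apply Rmult_le_compat_l; auto. apply Rmult_le_pos; [apply Rmult_ge0_3|]; auto.
Qed.

Lemma rows_trunc_err (Rw : nat -> nat -> C) (r : nat -> C) c M : 0 <= c ->
  (forall m p, Cmod (Rw m p) <= (c * exp_term z m) * exp_term z p) ->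
  (forall m, cvgC (fun n => csum n (Rw m)) (r m)) ->
  Cmod (Cminus (csum M r) (csum M (fun m => csum M (Rw m)))) <= c * exp z * tail M.
Proof.
  intros Hc Hmaj Hr. rewrite <- csum_sub.
  eapply Rle_trans. apply Cmod_csum_le.
  apply Rle_trans with (rsum M (fun m => (c * tail M) * exp_term z m)).
  - apply rsum_le. intros m _.
    replace ((c * tail M) * exp_term z m)
      with ((c * exp_term z m) * exp z - rsum M (fun p => (c * exp_term z m) * exp_term z p))
      by (unfold tail; rewrite rsum_scal_l; ring).
    apply cvgC_tail_le; auto using cvgR_exp_term_scal.
    intros p. apply Rmult_le_pos; [apply Rmult_le_pos|]; auto using exp_term_ge0.
  - rewrite rsum_scal_l. pose proof (rsum_exp_term_le z M Hz). pose proof (exp_tail_ge0 z M Hz).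
    fold (tail M) in *.
    replace (c * exp z * tail M) with ((c * tail M) * exp z) by ring.
    apply Rmult_le_compat_l; auto. apply Rmult_le_pos; auto.
Qed.

Variables (rp rn : nat -> C).
Hypotheses (Hrp : forall m, cvgC (fun n => csum n (fun p => T p (p + m)%nat)) (rp m))
           (Hrn : forall n, cvgC (fun k => csum k (fun q => T (q + n + 1)%nat q)) (rn n)).

Let C0 := 4 * A * exp z + A * exp z * exp z + A * exp z * z * exp z.

(* The [J]-th diagonal partial sum and the [K]-th partial row sums both approximate the
   square [p, q < K] when [2K <= J]. *)
Lemma diag_sum_near_rows K J : (2 * K <= J)%nat ->
  Cmod (Cminus (diag_sum T J) (Cplus (csum K rp) (csum K rn))) <= C0 * tail K.
Proof.
  intros HKJ.
  set (w := fun p q => (Nat.ltb p K && (Nat.leb p q && Nat.ltb q (p + K))) ||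
                       (Nat.ltb q K && (Nat.leb (q + 1) p && Nat.ltb p (q + 1 + K)))).
  assert (Hdiag : Cmod (Cminus (diag_sum T J) (square_sum T K)) <= 2 * A * exp z * tail K).
  { rewrite diag_sum_masked. apply masked_sum_square_err. lia.
    intros p q Hp Hq. destruct (Nat.ltb_spec (p + q) J); auto; lia. }
  assert (Hrows : Cplus (upper_sum T K) (lower_sum T K) = masked_sum T (2 * K + 1) w).
  { rewrite upper_sum_masked, lower_sum_masked. apply masked_sum_disjoint. intros p q.
    destruct (Nat.leb_spec p q), (Nat.leb_spec (q + 1) p); simpl; rewrite ?Bool.andb_false_r; auto; lia. }
  assert (Hsq : Cmod (Cminus (masked_sum T (2 * K + 1) w) (square_sum T K)) <= 2 * A * exp z * tail K).
  { apply masked_sum_square_err. lia. intros p q Hp Hq. unfold w.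
    destruct (Nat.leb_spec p q).
    - destruct (Nat.ltb_spec p K), (Nat.leb_spec p q), (Nat.ltb_spec q (p + K)); simpl; auto; lia.
    - destruct (Nat.ltb_spec q K), (Nat.leb_spec (q+1) p), (Nat.ltb_spec p (q + 1 + K)); simpl;
        rewrite ?Bool.orb_true_r; auto; lia. }
  assert (Hup : Cmod (Cminus (csum K rp) (upper_sum T K)) <= A * exp z * exp z * tail K).
  { apply (rows_trunc_err (fun m p => T p (p + m)%nat)); auto.
    apply Rmult_le_pos; auto. apply Rlt_le, exp_pos. apply upper_row_majorant. }
  assert (Hlow : Cmod (Cminus (csum K rn) (lower_sum T K)) <= A * exp z * z * exp z * tail K).
  { apply (rows_trunc_err (fun n q => T (q + n + 1)%nat q)); auto.
    apply Rmult_ge0_3; auto. apply Rlt_le, exp_pos. apply lower_row_majorant. }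
  set (e1 := Cminus (diag_sum T J) (square_sum T K)).
  set (e2 := Cminus (masked_sum T (2 * K + 1) w) (square_sum T K)).
  set (e3 := Cminus (csum K rp) (upper_sum T K)).
  set (e4 := Cminus (csum K rn) (lower_sum T K)).
  replace (Cminus (diag_sum T J) (Cplus (csum K rp) (csum K rn)))
    with (Cplus (Cplus e1 (Copp e2)) (Copp (Cplus e3 e4))) by (unfold e1, e2, e3, e4; rewrite <- Hrows; ring).
  pose proof (Cmod_triangle (Cplus e1 (Copp e2)) (Copp (Cplus e3 e4))).
  pose proof (Cmod_triangle e1 (Copp e2)). pose proof (Cmod_triangle e3 e4).
  rewrite !Cmod_opp in *. unfold e1, e2, e3, e4, C0 in *. lra.
Qed.

Theorem diag_sum_cvg sp sn : cvgC (fun n => csum n rp) sp -> cvgC (fun n => csum n rn) sn ->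
  cvgC (diag_sum T) (Cplus sp sn).
Proof.
  intros Hsp Hsn eps He.
  assert (HC0 : 0 <= C0).
  { unfold C0. pose proof (exp_pos z). assert (0 <= A * exp z) by (apply Rmult_le_pos; lra).
    assert (0 <= A * exp z * z * exp z) by (apply Rmult_le_pos; [apply Rmult_ge0_3|]; lra). nra. }
  destruct (exp_tail_small z (eps / 2 / (C0 + 1))) as [N0 HN0]. apply Rdiv_lt_0_compat; lra.
  destruct (Hsp (eps/4) ltac:(lra)) as [N1 HN1], (Hsn (eps/4) ltac:(lra)) as [N2 HN2].
  exists (2 * (N0 + N1 + N2))%nat. intros J HJ.
  set (K := Nat.div2 J).
  assert (HK : (2 * K <= J)%nat /\ (N0 + N1 + N2 <= K)%nat).
  { unfold K. pose proof (Nat.div2_odd J). destruct (Nat.odd J); simpl in *; lia. }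
  specialize (HN0 K ltac:(lia)). specialize (HN1 K ltac:(lia)). specialize (HN2 K ltac:(lia)).
  pose proof (diag_sum_near_rows K J (proj1 HK)) as Hnear. pose proof (exp_tail_ge0 z K Hz).
  assert (C0 * tail K <= eps / 2).
  { apply Rle_trans with ((C0 + 1) * (eps / 2 / (C0 + 1))).
    - unfold tail in *. apply Rmult_le_compat; lra.
    - right. field. lra. }
  replace (Cminus (diag_sum T J) (Cplus sp sn)) with
    (Cplus (Cminus (diag_sum T J) (Cplus (csum K rp) (csum K rn)))
           (Cplus (Cminus (csum K rp) sp) (Cminus (csum K rn) sn))) by ring.
  eapply Rle_lt_trans. apply Cmod_triangle.
  pose proof (Cmod_triangle (Cminus (csum K rp) sp) (Cminus (csum K rn) sn)). lra.
Qed.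

End DoubleSeries.

(* [bessel_coef u m = i^m J_m(2u)], so that [j0 m x = 2 pi bessel_coef (2 pi x) m]. *)
Definition bessel_coef (u : R) (m : Z) : C := Cmult (Cpowz Ci m) (RtoC (besselJ m (2 * u))).
Definition bessel_term (u : R) (m p : nat) : R :=
  (-1) ^ p / (INR (fact p) * INR (fact (p + m))) * u ^ (2 * p + m).

Lemma Ci_pow_sq k : Cmult (Cpow Ci k) (Cpow Ci k) = RtoC ((-1) ^ k).
Proof.
  rewrite <- Cpow_mult_l.
  replace (Cmult Ci Ci) with (RtoC (-1)) by (apply injective_projections; simpl; ring).
  rewrite RtoC_pow. auto.
Qed.
Lemma Ci_pow_double_add m p : Cpow Ci (2 * p + m) = Cmult (Cpow Ci m) (RtoC ((-1) ^ p)).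
Proof.
  rewrite Cpow_add_r, Cpow_mult_r.
  replace (Cpow Ci 2) with (RtoC (-1)) by (apply injective_projections; simpl; ring).
  rewrite <- RtoC_pow. ring.
Qed.
Lemma Ci_pow_neq0 n : Cpow Ci n <> RtoC 0.
Proof. apply Cpow_nz. intros E. injection E. lra. Qed.

Lemma bessel_coef_neg_pos u n :
  bessel_coef u (- Z.of_nat n) = Cmult (Cpow Ci n) (RtoC (besselJ_nat n (2 * u))).
Proof.
  unfold bessel_coef, Cpowz, besselJ. destruct n as [|n]; [reflexivity|].
  destruct (Z.leb_spec 0 (- Z.of_nat (S n))); try lia.
  replace (Z.to_nat (- - Z.of_nat (S n))) with (S n) by lia.
  rewrite RtoC_mult, <- Ci_pow_sq. field. apply Ci_pow_neq0.
Qed.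
Lemma bessel_coef_nat u n :
  bessel_coef u (Z.of_nat n) = Cmult (Cpow Ci n) (RtoC (besselJ_nat n (2 * u))).
Proof.
  unfold bessel_coef, Cpowz, besselJ. destruct (Z.leb_spec 0 (Z.of_nat n)); try lia.
  rewrite Nat2Z.id. reflexivity.
Qed.
Lemma bessel_coef_opp u p : bessel_coef u (- p) = bessel_coef u p.
Proof.
  destruct (Z.le_gt_cases 0 p).
  - rewrite <- (Z2Nat.id p) by lia. rewrite bessel_coef_neg_pos, bessel_coef_nat. reflexivity.
  - replace p with (- Z.of_nat (Z.to_nat (- p)))%Z by lia.
    rewrite Z.opp_involutive, bessel_coef_neg_pos, bessel_coef_nat. reflexivity.
Qed.

Lemma bessel_term_cvg u m : cvgR (fun n => rsum n (bessel_term u m)) (besselJ_nat m (2 * u)).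
Proof.
  set (z := Rabs u). assert (Hz : 0 <= z) by apply Rabs_pos.
  assert (Hmaj : forall p, Rabs (bessel_term u m p) <= (exp z * exp_term z m) * exp_term z p).
  { intros p. unfold bessel_term.
    pose proof (INR_fact_gt0 p). pose proof (INR_fact_gt0 (p + m)).
    rewrite Rabs_mult. unfold Rdiv. rewrite Rabs_mult, pow_1_abs, Rmult_1_l, <- RPow_abs.
    rewrite Rabs_right by (left; apply Rinv_0_lt_compat, Rmult_lt_0_compat; auto).
    replace (2 * p + m)%nat with (p + (p + m))%nat by lia. rewrite pow_add. fold z.
    replace (/ (INR (fact p) * INR (fact (p + m))) * (z ^ p * z ^ (p + m)))
      with (exp_term z p * exp_term z (p + m)) by (unfold exp_term; field; lra).
    pose proof (exp_term_add z p m Hz). pose proof (exp_term_le_exp z p Hz).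
    pose proof (exp_term_ge0 z p Hz). pose proof (exp_term_ge0 z m Hz).
    apply Rle_trans with (exp_term z p * (exp_term z p * exp_term z m)).
    - apply Rmult_le_compat_l; auto.
    - replace (exp_term z p * (exp_term z p * exp_term z m))
        with ((exp_term z m * exp_term z p) * exp_term z p) by ring.
      replace (exp z * exp_term z m * exp_term z p) with ((exp_term z m * exp_term z p) * exp z) by ring.
      apply Rmult_le_compat_l; auto. apply Rmult_le_pos; auto. }
  unfold besselJ_nat. rewrite (Series_ext _ (bessel_term u m)).
  2:{ intros k. unfold bessel_term. f_equal. f_equal. field. }
  apply is_series_R_cvgR, Series_correct.
  apply (ex_series_le (V := R_CompleteNormedModule) _ (fun p => (exp z * exp_term z m) * exp_term z p)).
  - intros p. apply Hmaj.
  - exists (exp z * exp_term z m * exp z). apply is_series_R_cvgR, cvgR_exp_term_scal.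
Qed.

(** * Term-by-term integration of the Jacobi–Anger expansion *)

Definition jacobi_term (u : R) (g : Z -> C) (p q : nat) : C :=
  Cmult (Cmult (Cpow (Cmult Ci (RtoC u)) (p + q)) (RtoC (/ (INR (fact p) * INR (fact q)))))
        (g (Z.of_nat q - Z.of_nat p)%Z).

Lemma jacobi_term_bound u g G p q : (forall m, Cmod (g m) <= G) ->
  Cmod (jacobi_term u g p q) <= G * exp_term (Rabs u) p * exp_term (Rabs u) q.
Proof.
  intros Hg. unfold jacobi_term. rewrite !Cmod_mult, Cmod_pow, Cmod_mult, Cmod_Ci, !Cmod_R, Rmult_1_l.
  pose proof (INR_fact_gt0 p). pose proof (INR_fact_gt0 q).
  rewrite (Rabs_right (/ _)) by (left; apply Rinv_0_lt_compat, Rmult_lt_0_compat; auto).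
  unfold exp_term. rewrite pow_add.
  replace (G * (Rabs u ^ p / INR (fact p)) * (Rabs u ^ q / INR (fact q))) with
    (Rabs u ^ p * Rabs u ^ q * / (INR (fact p) * INR (fact q)) * G) by (field; lra).
  apply Rmult_le_compat_l; auto. apply Rmult_le_pos. apply Rmult_le_pos; apply pow_le, Rabs_pos.
  left; apply Rinv_0_lt_compat, Rmult_lt_0_compat; auto.
Qed.

Lemma jacobi_upper_row_cvg u g m :
  cvgC (fun n => csum n (fun p => jacobi_term u g p (p + m)%nat))
       (Cmult (bessel_coef u (Z.of_nat m)) (g (Z.of_nat m))).
Proof.
  apply (cvgC_ext (fun p => Cmult (Cmult (Cpow Ci m) (g (Z.of_nat m))) (RtoC (bessel_term u m p)))).
  - intros p. unfold jacobi_term, bessel_term.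
    replace (Z.of_nat (p + m) - Z.of_nat p)%Z with (Z.of_nat m) by lia.
    replace (p + (p + m))%nat with (2 * p + m)%nat by lia.
    rewrite Cpow_mult_l, Ci_pow_double_add, <- RtoC_pow, !RtoC_mult. unfold Rdiv. rewrite RtoC_mult. ring.
  - rewrite bessel_coef_nat.
    replace (Cmult (Cmult (Cpow Ci m) (RtoC (besselJ_nat m (2 * u)))) (g (Z.of_nat m)))
      with (Cmult (Cmult (Cpow Ci m) (g (Z.of_nat m))) (RtoC (besselJ_nat m (2 * u)))) by ring.
    apply cvgC_scal, cvgC_RtoC, bessel_term_cvg.
Qed.

Lemma jacobi_lower_row_cvg u g n :
  cvgC (fun k => csum k (fun q => jacobi_term u g (q + n + 1)%nat q))
       (Cmult (bessel_coef u (- Z.of_nat (S n))%Z) (g (- Z.of_nat (S n))%Z)).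
Proof.
  apply (cvgC_ext (fun q => Cmult (Cmult (Cpow Ci (S n)) (g (- Z.of_nat (S n))%Z))
                                  (RtoC (bessel_term u (S n) q)))).
  - intros q. unfold jacobi_term, bessel_term.
    replace (Z.of_nat q - Z.of_nat (q + n + 1))%Z with (- Z.of_nat (S n))%Z by lia.
    replace (q + n + 1 + q)%nat with (2 * q + S n)%nat by lia.
    rewrite Cpow_mult_l, Ci_pow_double_add, <- RtoC_pow. replace (q + S n)%nat with (q + n + 1)%nat by lia.
    rewrite (Rmult_comm (INR (fact (q + n + 1))) (INR (fact q))). unfold Rdiv. rewrite !RtoC_mult. ring.
  - rewrite bessel_coef_neg_pos.
    replace (Cmult (Cmult (Cpow Ci (S n)) (RtoC (besselJ_nat (S n) (2 * u)))) (g (- Z.of_nat (S n))%Z))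
      with (Cmult (Cmult (Cpow Ci (S n)) (g (- Z.of_nat (S n))%Z)) (RtoC (besselJ_nat (S n) (2 * u))))
      by ring.
    apply cvgC_scal, cvgC_RtoC, bessel_term_cvg.
Qed.

Lemma IZR_of_nat_sub j p : (p <= j)%nat ->
  IZR (Z.of_nat (j - p) - Z.of_nat p) = INR j - 2 * INR p.
Proof. intros H. rewrite minus_IZR, <- !INR_IZR_INZ, minus_INR; auto. ring. Qed.

Lemma summable_of_majorant (r : nat -> C) c z : 0 <= z -> (forall m, Cmod (r m) <= c * exp_term z m) ->
  ex_series (fun m => Cmod (r m)) /\ exists s, cvgC (fun n => csum n r) s.
Proof.
  intros Hz Hr.
  assert (Hb : ex_series (fun m => c * exp_term z m))
    by (exists (c * exp z); apply is_series_R_cvgR, cvgR_exp_term_scal).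
  split.
  - apply (ex_series_le (V := R_CompleteNormedModule) _ (fun m => c * exp_term z m)); auto.
    intros m. change (norm (Cmod (r m))) with (Rabs (Cmod (r m))).
    rewrite Rabs_right by apply Rle_ge, Cmod_ge_0. auto.
  - destruct (ex_series_le (V := C_CompleteNormedModule) r (fun m => c * exp_term z m)) as [s Hs]; auto.
    exists s. apply is_series_C_cvgC; auto.
Qed.

Section JacobiAnger.

Variables (d : nat) (om : (nat -> R) -> R) (Hh : (nat -> R) -> C) (u MH : R).
Hypotheses (Hom : lipschitz d om) (HH : bounded_lipschitzC d Hh) (HM : forall th, Cmod (Hh th) <= MH).

Let g (m : Z) : C := cube_intC d (fun th => Cmult (cis (IZR m * om th)) (Hh th)).
Let G := 2 * (2 * PI) ^ d * MH.
Let z := Rabs u.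

Lemma bounded_lipschitzC_cis_om_Hh r : bounded_lipschitzC d (fun th => Cmult (cis (r * om th)) (Hh th)).
Proof. apply bounded_lipschitzC_mul; auto. apply bounded_lipschitzC_cis, lipschitz_scal; auto. Qed.

Lemma bounded_lipschitzC_cexp_term j :
  bounded_lipschitzC d (fun th => Cmult (cexp_term (2 * u * cos (om th)) j) (Hh th)).
Proof.
  apply bounded_lipschitzC_mul; auto.
  unfold cexp_term. apply bounded_lipschitzC_mul; [|apply bounded_lipschitzC_const].
  apply bounded_lipschitzC_pow, bounded_lipschitzC_mul. apply bounded_lipschitzC_const.
  apply bounded_lipschitzC_RtoC, bounded_lipschitz_ext with (fun th => (2 * u) * cos (om th)).
  intros; ring. apply bounded_lipschitz_scal, bounded_lipschitz_cos; auto.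
Qed.

Lemma bounded_lipschitzC_partial_sum N :
  bounded_lipschitzC d (fun th => Cmult (csum N (cexp_term (2 * u * cos (om th)))) (Hh th)).
Proof.
  apply bounded_lipschitzC_ext with
    (fun th => csum N (fun j => Cmult (cexp_term (2 * u * cos (om th)) j) (Hh th))).
  { intros; rewrite csum_scal_r; auto. }
  apply bounded_lipschitzC_csum, bounded_lipschitzC_cexp_term.
Qed.

Lemma G_ge0 : 0 <= G.
Proof.
  pose proof (HM (fun _ => 0)). pose proof (Cmod_ge_0 (Hh (fun _ => 0))). pose proof PI_RGT_0.
  unfold G. apply Rmult_ge0_3; try lra. apply pow_le; lra.
Qed.

Lemma Cmod_g_le m : Cmod (g m) <= G.
Proof.
  apply cube_intC_bound. apply bounded_lipschitzC_cis_om_Hh.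
  intros th. rewrite Cmod_mult, Cmod_cis, Rmult_1_l. auto.
Qed.

Lemma jacobi_term_majorant p q : Cmod (jacobi_term u g p q) <= G * exp_term z p * exp_term z q.
Proof. apply jacobi_term_bound, Cmod_g_le. Qed.

Lemma diag_sum_jacobi_term N : diag_sum (jacobi_term u g) N =
  cube_intC d (fun th => Cmult (csum N (cexp_term (2 * u * cos (om th)))) (Hh th)).
Proof.
  rewrite (cube_intC_ext _ _ (fun th => csum N (fun j => Cmult (cexp_term (2 * u * cos (om th)) j) (Hh th))))
    by (intros; rewrite csum_scal_r; auto).
  rewrite cube_intC_csum by apply bounded_lipschitzC_cexp_term.
  unfold diag_sum. apply csum_ext. intros j _.
  rewrite (cube_intC_ext _ _ (fun th => csum (S j) (fun p =>
             Cmult (Cmult (Cpow (Cmult Ci (RtoC u)) j) (RtoC (binom_fact j p)))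
                   (Cmult (cis ((INR j - 2 * INR p) * om th)) (Hh th))))).
  2:{ intros th. rewrite cexp_term_cos_expand, <- csum_scal_r. apply csum_ext. intros; ring. }
  rewrite cube_intC_csum.
  2:{ intros p. apply bounded_lipschitzC_mul. apply bounded_lipschitzC_const.
      apply bounded_lipschitzC_cis_om_Hh. }
  apply csum_ext. intros p Hp. rewrite cube_intC_scal by apply bounded_lipschitzC_cis_om_Hh.
  unfold jacobi_term, g. replace (p + (j - p))%nat with j by lia.
  unfold binom_fact. rewrite IZR_of_nat_sub by lia. reflexivity.
Qed.

Let F th := Cmult (cis (2 * u * cos (om th))) (Hh th).

Lemma cube_int_partial_sum_err N :
  Cmod (Cminus (cube_intC d F) (diag_sum (jacobi_term u g) N))
    <= G * (exp (2 * z) - rsum N (exp_term (2 * z))).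
Proof.
  assert (HF : bounded_lipschitzC d F).
  { apply bounded_lipschitzC_mul; auto. apply bounded_lipschitzC_cis.
    apply lipschitz_scal, bounded_lipschitz_lipschitz, bounded_lipschitz_cos; auto. }
  rewrite diag_sum_jacobi_term, <- cube_intC_minus by (auto using bounded_lipschitzC_partial_sum).
  pose proof (exp_tail_ge0 (2 * z) N ltac:(unfold z; pose proof (Rabs_pos u); lra)).
  unfold G. rewrite Rmult_assoc. apply cube_intC_bound.
  - apply bounded_lipschitzC_ext with
      (fun th => Cplus (F th) (Cmult (RtoC (-1))
                   (Cmult (csum N (cexp_term (2 * u * cos (om th)))) (Hh th)))).
    { intros; unfold Cminus; ring. }
    apply bounded_lipschitzC_add; auto. apply bounded_lipschitzC_mul.
    apply bounded_lipschitzC_const. apply bounded_lipschitzC_partial_sum.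
  - intros th. unfold F.
    replace (Cminus (Cmult (cis (2 * u * cos (om th))) (Hh th))
                    (Cmult (csum N (cexp_term (2 * u * cos (om th)))) (Hh th)))
      with (Cmult (Cminus (cis (2 * u * cos (om th))) (csum N (cexp_term (2 * u * cos (om th))))) (Hh th))
      by ring.
    rewrite Cmod_mult, Rmult_comm. apply Rmult_le_compat; auto using Cmod_ge_0.
    apply cis_tail. unfold z. rewrite !Rabs_mult, (Rabs_right 2) by lra.
    assert (Rabs (cos (om th)) <= 1) by (apply Rabs_le, COS_bound).
    pose proof (Rabs_pos u). nra.
Qed.

Lemma diag_sum_jacobi_term_cvg : cvgC (diag_sum (jacobi_term u g)) (cube_intC d F).
Proof.
  intros eps He. pose proof G_ge0.
  destruct (exp_tail_small (2 * z) (eps / (G + 1))) as [N0 HN0]. apply Rdiv_lt_0_compat; lra.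
  exists N0. intros N HN. specialize (HN0 N HN).
  rewrite <- Cmod_opp.
  replace (Copp (Cminus (diag_sum (jacobi_term u g) N) (cube_intC d F)))
    with (Cminus (cube_intC d F) (diag_sum (jacobi_term u g) N)) by ring.
  eapply Rle_lt_trans. apply cube_int_partial_sum_err.
  pose proof (exp_tail_ge0 (2 * z) N ltac:(unfold z; pose proof (Rabs_pos u); lra)).
  apply Rle_lt_trans with ((G + 1) * (exp (2 * z) - rsum N (exp_term (2 * z)))). nra.
  apply Rmult_lt_reg_r with (/ (G + 1)). apply Rinv_0_lt_compat; lra.
  replace ((G + 1) * (exp (2 * z) - rsum N (exp_term (2 * z))) * / (G + 1))
    with (exp (2 * z) - rsum N (exp_term (2 * z))) by (field; lra). auto.
Qed.

Let a_pos (m : nat) : C := Cmult (bessel_coef u (Z.of_nat m)) (g (Z.of_nat m)).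
Let a_neg (n : nat) : C := Cmult (bessel_coef u (- Z.of_nat (S n))%Z) (g (- Z.of_nat (S n))%Z).

Lemma jacobi_rows_summable :
  (ex_series (fun m => Cmod (a_pos m)) /\ exists sp, cvgC (fun n => csum n a_pos) sp) /\
  (ex_series (fun n => Cmod (a_neg n)) /\ exists sn, cvgC (fun n => csum n a_neg) sn).
Proof.
  pose proof G_ge0. assert (Hz : 0 <= z) by apply Rabs_pos. pose proof (exp_pos z).
  split.
  - apply (summable_of_majorant _ (G * exp z * exp z) z); auto. intros m.
    eapply Rle_trans.
    + apply (cvgC_limit_le (fun p => jacobi_term u g p (p + m)%nat) _
               (fun p => (G * exp z * exp_term z m) * exp_term z p)
               ((G * exp z * exp_term z m) * exp z)).
      * apply jacobi_upper_row_cvg.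
      * intros p. apply upper_row_majorant; auto using jacobi_term_majorant.
      * intros p. pose proof (exp_term_ge0 z p Hz). pose proof (exp_term_ge0 z m Hz).
        apply Rmult_le_pos; [apply Rmult_ge0_3|]; auto; lra.
      * apply cvgR_exp_term_scal.
    + right; ring.
  - apply (summable_of_majorant _ (G * exp z * z * exp z) z); auto. intros n.
    eapply Rle_trans.
    + apply (cvgC_limit_le (fun q => jacobi_term u g (q + n + 1)%nat q) _
               (fun q => (G * exp z * z * exp_term z n) * exp_term z q)
               ((G * exp z * z * exp_term z n) * exp z)).
      * apply jacobi_lower_row_cvg.
      * intros q. apply lower_row_majorant; auto using jacobi_term_majorant.
      * intros q. pose proof (exp_term_ge0 z q Hz). pose proof (exp_term_ge0 z n Hz).
        apply Rmult_le_pos; [apply Rmult_le_pos; [apply Rmult_ge0_3|]|]; auto; lra.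
      * apply cvgR_exp_term_scal.
    + right; ring.
Qed.

(* Jacobi–Anger [e^{2iu cos w} = sum_m i^m J_m(2u) e^{imw}], integrated against [Hh]. *)
Theorem jacobi_anger_cube_int : exists sp sn,
  cvgC (fun n => csum n a_pos) sp /\ cvgC (fun n => csum n a_neg) sn /\
  ex_series (fun m => Cmod (a_pos m)) /\ ex_series (fun n => Cmod (a_neg n)) /\
  cube_intC d F = Cplus sp sn.
Proof.
  destruct jacobi_rows_summable as [[Ap [sp Hsp]] [An [sn Hsn]]].
  exists sp, sn. repeat split; auto.
  eapply cvgC_unique. apply diag_sum_jacobi_term_cvg.
  apply (diag_sum_cvg _ G z G_ge0 (Rabs_pos u) jacobi_term_majorant a_pos a_neg);
    auto using jacobi_upper_row_cvg, jacobi_lower_row_cvg.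
Qed.

End JacobiAnger.

(** * Bessel's integral and the theorem *)

Lemma sin_IZR_2PI n : sin (IZR n * (2 * PI)) = 0.
Proof. apply sin_eq_0_1. exists (2 * n)%Z. rewrite mult_IZR. simpl. ring. Qed.
Lemma cos_IZR_2PI n : cos (IZR n * (2 * PI)) = 1.
Proof.
  replace (IZR n * (2 * PI)) with (2 * (IZR n * PI)) by ring. rewrite cos_2a_sin, sin_eq_0_1. ring.
  exists n; auto.
Qed.

Lemma circle_int_cis n : circle_int (fun t => cis (IZR n * t)) = if Z.eqb n 0 then RtoC (2 * PI) else RtoC 0.
Proof.
  unfold circle_int, cis. simpl. destruct (Z.eqb_spec n 0) as [->|Hn].
  - rewrite (RInt_ext (V := R_CompleteNormedModule) _ (fun _ => 1)),
            (RInt_ext (V := R_CompleteNormedModule) (fun t => sin (0 * t)) (fun _ => 0)).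
    + rewrite !(RInt_const (V := R_CompleteNormedModule)).
      apply injective_projections; simpl; unfold scal; simpl; unfold mult; simpl; ring.
    + intros; rewrite Rmult_0_l, sin_0; auto.
    + intros; rewrite Rmult_0_l, cos_0; auto.
  - apply not_0_IZR in Hn.
    rewrite (is_RInt_unique (V := R_CompleteNormedModule) (fun t => cos (IZR n * t)) 0 (2 * PI)
               (minus (sin (IZR n * (2 * PI)) / IZR n) (sin (IZR n * 0) / IZR n))),
            (is_RInt_unique (V := R_CompleteNormedModule) (fun t => sin (IZR n * t)) 0 (2 * PI)
               (minus (- cos (IZR n * (2 * PI)) / IZR n) (- cos (IZR n * 0) / IZR n))).
    + rewrite sin_IZR_2PI, cos_IZR_2PI, Rmult_0_r, sin_0, cos_0.
      apply injective_projections; simpl; unfold minus, plus, opp; simpl; field; auto.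
    + apply (is_RInt_derive (V := R_CompleteNormedModule) (fun t => - cos (IZR n * t) / IZR n)).
      * intros x _. auto_derive; auto. field; auto.
      * intros x _. apply lipschitz_continuous with (Rabs (IZR n)). intros t s.
        eapply Rle_trans. apply sin_lipschitz. rewrite <- Rabs_mult. right; f_equal; ring.
    + apply (is_RInt_derive (V := R_CompleteNormedModule) (fun t => sin (IZR n * t) / IZR n)).
      * intros x _. auto_derive; auto. field; auto.
      * intros x _. apply lipschitz_continuous with (Rabs (IZR n)). intros t s.
        eapply Rle_trans. apply cos_lipschitz. rewrite <- Rabs_mult. right; f_equal; ring.
Qed.

Lemma cvgC_single_term (a : nat -> C) k c s : (forall m, a m = if Nat.eqb m k then c else RtoC 0) ->
  cvgC (fun n => csum n a) s -> s = c.
Proof. intros Ha Hs. symmetry. apply (cvgC_unique _ _ _ (cvgC_delta k c)). eapply cvgC_ext; eauto. Qed.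

(* Only the term [m = -p] of the Jacobi–Anger expansion survives the integration. *)
Lemma bessel_integral u p :
  circle_int (fun t => Cmult (cis (2 * u * cos t)) (cis (IZR p * t))) =
  Cmult (RtoC (2 * PI)) (bessel_coef u p).
Proof.
  destruct (jacobi_anger_cube_int 1 (fun th => th O) (fun th => cis (IZR p * th O)) u 1)
    as [sp [sn [Hsp [Hsn [_ [_ E]]]]]].
  - apply lipschitz_coord; lia.
  - apply bounded_lipschitzC_cis, lipschitz_scal, lipschitz_coord; lia.
  - intros; rewrite Cmod_cis; lra.
  - change (circle_int (fun t => Cmult (cis (2 * u * cos t)) (cis (IZR p * t)))) with
      (cube_intC 1 (fun th => Cmult (cis (2 * u * cos (th O))) (cis (IZR p * th O)))).
    rewrite E.
    assert (Hg : forall m, cube_intC 1 (fun th => Cmult (cis (IZR m * th O)) (cis (IZR p * th O))) =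
                           if Z.eqb (m + p) 0 then RtoC (2 * PI) else RtoC 0).
    { intros m. rewrite <- circle_int_cis. change (cube_intC 1 ?f) with (circle_int (fun t => f (fun _ => t))).
      f_equal. apply functional_extensionality. intros t. rewrite <- cis_add, plus_IZR. f_equal; ring. }
    set (c := Cmult (RtoC (2 * PI)) (bessel_coef u p)).
    destruct (Z.le_gt_cases p 0).
    + assert (Ep : sp = c).
      { eapply (cvgC_single_term _ (Z.to_nat (- p))); [|exact Hsp]. intros m. cbv beta.
        rewrite Hg. unfold c.
        destruct (Nat.eqb_spec m (Z.to_nat (- p))), (Z.eqb_spec (Z.of_nat m + p) 0); try lia; try ring.
        replace (Z.of_nat m) with (- p)%Z by lia. rewrite bessel_coef_opp. ring. }
      assert (En : sn = RtoC 0).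
      { eapply (cvgC_single_term _ O); [|exact Hsn]. intros n. cbv beta.
        rewrite Hg. destruct (Z.eqb_spec (- Z.of_nat (S n) + p) 0), (Nat.eqb n 0); lia || ring. }
      rewrite Ep, En. ring.
    + assert (Ep : sp = RtoC 0).
      { eapply (cvgC_single_term _ O); [|exact Hsp]. intros m. cbv beta.
        rewrite Hg. destruct (Z.eqb_spec (Z.of_nat m + p) 0), (Nat.eqb m 0); lia || ring. }
      assert (En : sn = c).
      { eapply (cvgC_single_term _ (Z.to_nat p - 1)); [|exact Hsn]. intros n. cbv beta.
        rewrite Hg. unfold c.
        destruct (Nat.eqb_spec n (Z.to_nat p - 1)), (Z.eqb_spec (- Z.of_nat (S n) + p) 0); try lia; try ring.
        replace (- Z.of_nat (S n))%Z with (- p)%Z by lia. rewrite bessel_coef_opp. ring. }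
      rewrite Ep, En. ring.
Qed.

Lemma sumd_scal_add d a th F : a * sumd d th + sumd d F = sumd d (fun l => a * th l + F l).
Proof. induction d; simpl. ring. rewrite <- IHd. ring. Qed.

Lemma Jk_weight d (k : nat -> Z) (y : nat -> R) X phi m :
  cube_intC d (fun th => Cmult (cis (IZR m * (sumd d th + phi)))
                   (cis (sumd d (fun l => IZR (k l) * th l + 2 * X * / y l * cos (th l))))) =
  Cmult (cis (IZR m * phi)) (Cprodd d (fun l => Cmult (RtoC (2 * PI)) (bessel_coef (X * / y l) (k l + m)))).
Proof.
  set (h := fun l t => Cmult (cis (2 * (X * / y l) * cos t)) (cis (IZR (k l + m) * t))).
  assert (Hh : forall l, bounded_lipschitzC1 (h l)).
  { intros l. destruct (lipschitz_lin_cos (IZR (k l + m)) (2 * (X * / y l))) as [K HK].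
    replace (h l) with (fun t => cis (IZR (k l + m) * t + 2 * (X * / y l) * cos t)).
    - apply bounded_lipschitzC1_cis with K; auto.
    - apply functional_extensionality. intros t. unfold h. rewrite cis_add. ring. }
  rewrite (cube_intC_ext d _ (fun th => Cmult (cis (IZR m * phi)) (Cprodd d (fun l => h l (th l))))).
  - rewrite cube_intC_scal, cube_intC_Cprodd by (auto; apply bounded_lipschitzC_Cprodd; auto).
    f_equal. apply Cprodd_ext. intros l _. apply bessel_integral.
  - intros th. rewrite <- cis_add.
    replace (IZR m * (sumd d th + phi) + sumd d (fun l => IZR (k l) * th l + 2 * X * / y l * cos (th l)))
      with (IZR m * phi + sumd d (fun l => IZR m * th l + (IZR (k l) * th l + 2 * X * / y l * cos (th l))))
      by (rewrite <- sumd_scal_add; ring).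
    rewrite cis_add, cis_sumd. f_equal. apply Cprodd_ext. intros l _. unfold h.
    rewrite <- cis_add, plus_IZR. f_equal. ring.
Qed.

Lemma Z_series_scal (a b : Z -> C) c sp sn : (forall m, a m = Cmult c (b m)) ->
  cvgC (fun n => csum n (fun m => b (Z.of_nat m))) sp ->
  cvgC (fun n => csum n (fun m => b (- Z.of_nat (S m))%Z)) sn ->
  ex_series (fun m => Cmod (b (Z.of_nat m))) -> ex_series (fun m => Cmod (b (- Z.of_nat (S m))%Z)) ->
  abs_summable_Z a /\ is_sum_Z a (Cplus (Cmult c sp) (Cmult c sn)).
Proof.
  intros Hab Hsp Hsn Ap An.
  assert (Hmod : forall m, Cmod (a m) = Cmod c * Cmod (b m)) by (intros; rewrite Hab, Cmod_mult; auto).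
  split; [split|].
  - apply ex_series_ext with (fun n => Cmod c * Cmod (b (Z.of_nat n))); auto.
    apply (ex_series_scal (V := R_NormedModule)). auto.
  - apply ex_series_ext with (fun n => Cmod c * Cmod (b (- Z.of_nat (S n))%Z)); auto.
    apply (ex_series_scal (V := R_NormedModule)). auto.
  - exists (Cmult c sp), (Cmult c sn). repeat split; apply is_series_C_cvgC.
    + eapply cvgC_ext. 2: apply cvgC_scal; exact Hsp. intros n. rewrite Hab. auto.
    + eapply cvgC_ext. 2: apply cvgC_scal; exact Hsn. intros n. rewrite Hab. auto.
Qed.

Lemma j0_bessel_coef m x v : j0 m (x * v) = Cmult (RtoC (2 * PI)) (bessel_coef (2 * PI * x * v) m).
Proof. unfold j0, bessel_coef. do 4 f_equal. ring. Qed.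

Theorem lemma6p13 (d : nat) (k : nat -> Z) (x : R) (y : nat -> R) (phi : R) :
  (1 <= d)%nat -> 0 < x -> (forall l, (l < d)%nat -> 0 < y l) ->
  let a := fun m : Z =>
    Cmult (cis (IZR m * phi))
      (Cmult (j0 m (x * prodd d y))
             (Cprodd d (fun l => j0 (k l + m)%Z (x * / y l)))) in
  abs_summable_Z a /\
  exists s : C, is_sum_Z a s /\
    Jk d k y (2 * PI * x) phi = Cmult (Cdiv (RtoC 1) (RtoC (2 * PI))) s.
Proof.
  intros _ _ _ a. set (X := 2 * PI * x).
  set (Hh := fun th => cis (sumd d (fun l => IZR (k l) * th l + 2 * X * / y l * cos (th l)))).
  destruct (jacobi_anger_cube_int d (fun th => sumd d th + phi) Hh (X * prodd d y) 1)
    as [sp [sn [Hsp [Hsn [Ap [An HJ]]]]]].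
  - apply lipschitz_add. apply (lipschitz_sumd d (fun _ s => s)). exists 1; intros; lra.
    apply lipschitz_const.
  - apply bounded_lipschitzC_cis, (lipschitz_sumd d (fun l s => IZR (k l) * s + 2 * X * / y l * cos s)).
    intros l. apply lipschitz_lin_cos.
  - intros th. unfold Hh. rewrite Cmod_cis. lra.
  - assert (Ha : forall m, a m = Cmult (RtoC (2 * PI)) (Cmult (bessel_coef (X * prodd d y) m)
              (cube_intC d (fun th => Cmult (cis (IZR m * (sumd d th + phi))) (Hh th))))).
    { intros m. unfold a, Hh, X. rewrite Jk_weight, j0_bessel_coef.
      rewrite (Cprodd_ext d _ (fun l => Cmult (RtoC (2 * PI)) (bessel_coef (2 * PI * x * / y l) (k l + m))))
        by (intros; apply j0_bessel_coef).
      ring. }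
    destruct (Z_series_scal a _ _ sp sn Ha Hsp Hsn Ap An) as [Habs Hsum].
    split; auto. eexists; split; [exact Hsum|].
    change (Jk d k y X phi) with (cube_intC d (fun th => cis (Theta d k th y X phi))).
    rewrite (cube_intC_ext _ _ (fun th => Cmult (cis (2 * (X * prodd d y) * cos (sumd d th + phi))) (Hh th)))
      by (intros th; unfold Theta, Hh; rewrite <- cis_add; f_equal; ring).
    rewrite HJ. field. intros E. injection E. pose proof PI_RGT_0. lra.
Qed.
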